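(* Let $f$ be a function on $\Omega_+$ depending only on $\zeta_0,\dots,\zeta_{m-1}$ ($m\ge1$), written as $f=\sum_{\gamma\subset\{0,\dots,m-1\}}f_\gamma\Psi_\gamma$. Then $G^{(f)}\in\mathcal H_M$ and $$\|G^{(f)}\|_M\le C\max_{\gamma\subset\{0,\dots,m-1\}}|f_\gamma|\,(1+\mu_* )^m,$$ where $C>0$ is a constant independent of $f$ and $m$.
   Context: Model. Fix $d\ge1$. $(X_t,\xi_t)_{t\in\mathbb{Z}_+}$ is a Markov chain with $X_t\in\mathbb{Z}^d$, $X_0=0$, $\xi_t\in\Omega:=\{-1,+1\}^{\mathbb{Z}^d}$. Given $X_t=x,\xi_t=\bar\xi$, the next position and the next environment are conditionally independent; $P(X_{t+1}=x+u\mid X_t=x,\xi_t=\bar\xi)=P_0(u)+\epsilon c(u)\bar\xi(x)$, where $\epsilon>0$, $P_0$ is an even, finite-range probability distribution on $\mathbb{Z}^d$ with $|\sum_u P_0(u)e^{i(\lambda,u)}|=1$ iff $\lambda=0$ and such that $1/\tilde p_0(\lambda)$ (with $\tilde p_0(\lambda)=\sum_u P_0(u)e^{i(\lambda,u)}$) has absolutely summable Fourier coefficients, and $c$ is an odd finite-range real function with $P_0(u)\pm\epsilon c(u)\in[0,1)$. Given $X_t=x,\xi_t=\bar\xi$, the values $\xi_{t+1}(y)$, $y\in\mathbb{Z}^d$, are independent with $P(\xi_{t+1}(y)=s)=Q_0(\bar\xi(y),s)$ if $y\ne x$ and $Q_1(\bar\xi(y),s)$ if $y=x$, where $Q_0,Q_1$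 are symmetric $2\times2$ stochastic matrices, $Q_0$ has eigenvalues $1,\mu$ with $0<|\mu|<1$, and $Q_1-Q_0=O(\epsilon)$. The environment seen from the walk, $\eta_t(x)=\xi_t(X_t+x)$, is a Markov chain on $\Omega$ with stochastic operator $(\mathcal T f)(\bar\eta)=\mathcal E[f(\eta_{t+1})\mid\eta_t=\bar\eta]$. $\Pi_0$ is the product of uniform measures on $\{\pm1\}$. For finite $\Gamma\subset\mathbb{Z}^d$ let $\Phi_\Gamma(\eta)=\prod_{x\in\Gamma}\eta(x)$, $\Phi_\emptyset=1$; each $f\in L^2(\Omega,\Pi_0)$ is written $f=\sum_\Gamma f_\Gamma\Phi_\Gamma$. For a fixed $M>1$, $\mathcal H_M=\{f:\|f\|_M:=\sum_\Gamma|f_\Gamma|M^{|\Gamma|}<\infty\}$. Standing assumptions (valid for $\epsilon,|\mu|$ small): $\mathcal T$ maps $\mathcal H_M$ into itself; the chain $(\eta_t)$ has an invariant probability measure $\Pi$, absolutely continuous w.r.t. $\Pi_0$ with bounded density; there is $\bar\mu\in(0,1)$ with $\|\mathcal T f\|_M\le\bar\mu\|f\|_M$ for all $f\in\widehat{\mathcal H}_M:=\{f\in\mathcal H_M:\int f\,d\Pi=0\}$. The dynamics and $\Pi$ are invariant under the global spin flip $\eta\mapsto-\eta$. Path space notation: $\widehat\Omega=\{\pm1\}^{\mathbb{Z}^d\times\mathbb{Z}_+}$; $\mathcal P_\Pi$ is the law of $(\eta_t)_{t\ge0}$ with $\eta_0\sim\Pi$; $\mathfrak M_{t_0}^{t_1}$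 is the $\sigma$-algebra generated by $\eta_{t_0},\dots,\eta_{t_1}$, $\mathfrak M_t=\mathfrak M_t^t$. For a bounded measurable function $F$ on $\widehat\Omega$, $G^{(F)}(\eta):=\mathcal E[F\mid\mathfrak M_0]$ viewed as a function of $\eta_0=\eta\in\Omega$ (the expectation of $F$ for the chain started at $\eta$). $\zeta_t:=\eta_t(0)$, $\widehat\zeta=(\zeta_t)_{t\ge0}\in\Omega_+:=\{\pm1\}^{\mathbb{Z}_+}$; a function $f$ on $\Omega_+$ is identified with the function $f(\widehat\zeta)$ on $\widehat\Omega$. Walsh functions: $\Psi_\gamma(\widehat\zeta)=\prod_{t\in\gamma}\zeta_t$ for finite $\gamma\subset\mathbb{Z}_+$, $\Psi_\emptyset=1$. $\mu_*:=M\sqrt{\bar\mu(1+2\bar\mu)}$. *)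

From Stdlib Require Import Reals Lra List ZArith Permutation.
Import ListNotations.
Open Scope R_scope.

Definition Site := list Z.
Definition site_eq_dec : forall x y : Site, {x = y} + {x <> y} := list_eq_dec Z.eq_dec.

Fixpoint vadd (x y : Site) : Site :=
  match x, y with
  | a :: x', b :: y' => (a + b)%Z :: vadd x' y'
  | _, _ => []
  end.
Definition vneg (x : Site) : Site := map Z.opp x.
Definition vsub (x y : Site) : Site := vadd x (vneg y).
Definition origin (d : nat) : Site := repeat 0%Z d.

Definition valid_site (d : nat) (x : Site) : Prop := length x = d.
Definition in_box (K : nat) (x : Site) : Prop :=
  Forall (fun z => (Z.abs z <= Z.of_nat K)%Z) x.

Definition lsum {A : Type} (f : A -> R) (l : list A) : R :=
  fold_right (fun a r => f a + r) 0 l.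
Definition lprod {A : Type} (f : A -> R) (l : list A) : R :=
  fold_right (fun a r => f a * r) 1 l.

Definition zrange (K : nat) : list Z :=
  map (fun n => (Z.of_nat n - Z.of_nat K)%Z) (seq 0 (2 * K + 1)).
Fixpoint box (d K : nat) : list Site :=
  match d with
  | O => [[]]
  | S d' => flat_map (fun z => map (cons z) (box d' K)) (zrange K)
  end.

Fixpoint subsets {A : Type} (l : list A) : list (list A) :=
  match l with
  | [] => [[]]
  | a :: l' => subsets l' ++ map (cons a) (subsets l')
  end.

Definition sg (b : bool) : R := if b then 1 else -1.

Definition Config := Site -> bool.
Definition upd (s : Config) (y : Site) (b : bool) : Config :=
  fun x => if site_eq_dec x y then b else s x.
(* all configurations on a finite window L (value false outside L) *)
Fixpoint configs (L : list Site) : list Config :=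
  match L with
  | [] => [fun _ => false]
  | y :: L' => flat_map (fun s => [upd s y true; upd s y false]) (configs L')
  end.

Definition depends_on (L : list Site) (g : Config -> R) : Prop :=
  forall s s', (forall x, In x L -> s x = s' x) -> g s = g s'.

Definition Phi (G : list Site) (s : Config) : R := lprod (fun x => sg (s x)) G.
(* Fourier coefficient g_Gamma in L^2(Pi_0), for g depending only on window L *)
Definition fcoef (L : list Site) (g : Config -> R) (G : list Site) : R :=
  (/ 2) ^ length L * lsum (fun s => g s * Phi G s) (configs L).
Definition normM (M : R) (L : list Site) (g : Config -> R) : R :=
  lsum (fun G => Rabs (fcoef L g G) * M ^ length G) (subsets L).

Definition dotR (l : list R) (u : Site) : R :=
  fold_right Rplus 0 (map (fun p => fst p * IZR (snd p)) (combine l u)).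

Definition sym_stoch (Q : bool -> bool -> R) : Prop :=
  (forall s s', 0 <= Q s s') /\ (forall s, Q s true + Q s false = 1) /\
  Q true false = Q false true.

(* the nontrivial eigenvalue mu of the symmetric 2x2 stochastic matrix Q0 *)
Definition mu_of (Q0 : bool -> bool -> R) : R := Q0 true true - Q0 true false.

Definition model_hyp (d : nat) (U : list Site) (Rr : nat) (P0 c : Site -> R)
    (eps : R) (Q0 Q1 : bool -> bool -> R) : Prop :=
  (1 <= d)%nat /\
  NoDup U /\ (forall u, In u U -> valid_site d u /\ in_box Rr u) /\
  (forall u, ~ In u U -> P0 u = 0 /\ c u = 0) /\
  (forall u, 0 <= P0 u) /\ lsum P0 U = 1 /\ (forall u, P0 (vneg u) = P0 u) /\
  (* |p0~(lambda)| = 1 iff lambda = 0 (lambda on the torus (-pi,pi]^d) *)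
  (forall lam : list R, length lam = d -> Forall (fun a => - PI < a <= PI) lam ->
     (Rsqr (lsum (fun u => P0 u * cos (dotR lam u)) U) +
      Rsqr (lsum (fun u => P0 u * sin (dotR lam u)) U) = 1
      <-> Forall (fun a => a = 0) lam)) /\
  (* 1/p0~ has absolutely summable Fourier coefficients a_k:
     a in l^1(Z^d) and p0~ * (sum_k a_k e^{i(lambda,k)}) = 1, i.e. P0 * a = delta_0 *)
  (exists a : Site -> R,
     (exists B, forall L, NoDup L -> Forall (valid_site d) L ->
        lsum (fun k => Rabs (a k)) L <= B) /\
     (forall x, valid_site d x ->
        lsum (fun u => P0 u * a (vsub x u)) U =
        if site_eq_dec x (origin d) then 1 else 0)) /\
  (forall u, c (vneg u) = - c u) /\ 0 < eps /\
  (forall u, 0 <= P0 u + eps * c u < 1 /\ 0 <= P0 u - eps * c u < 1) /\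
  sym_stoch Q0 /\ sym_stoch Q1 /\ 0 < Rabs (mu_of Q0) < 1.

(* ---------- the operator T of the environment seen from the walk ----------
   (T g)(eta) = E[g(eta_1) | eta_0 = eta], for g depending only on box d K:
   the walk jumps by u with prob P0(u) + eps c(u) eta(0); then
   eta_1(x) = xi_1(u + x), where xi_1(y) ~ Q_{[y = X_0]}(xi_0(y), .). *)
Definition Top (d : nat) (U : list Site) (P0 c : Site -> R) (eps : R)
    (Q0 Q1 : bool -> bool -> R) (K : nat) (g : Config -> R) (eta : Config) : R :=
  lsum (fun u =>
    (P0 u + eps * c u * sg (eta (origin d))) *
    lsum (fun s => g s *
       lprod (fun x =>
         (if site_eq_dec (vadd u x) (origin d) then Q1 else Q0)
           (eta (vadd u x)) (s x)) (box d K))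
      (configs (box d K))) U.

(* integral w.r.t. Pi of g depending only on window L; Pi is given by its
   finite-dimensional marginals piw L s = Pi(eta = s on L) *)
Definition integ (piw : list Site -> Config -> R) (L : list Site) (g : Config -> R) : R :=
  lsum (fun s => g s * piw L s) (configs L).

Definition standing_hyp (d : nat) (U : list Site) (Rr : nat) (P0 c : Site -> R)
    (eps : R) (Q0 Q1 : bool -> bool -> R) (M mubar : R)
    (piw : list Site -> Config -> R) : Prop :=
  1 < M /\ 0 < mubar < 1 /\
  (* piw is a consistent family of marginals of a probability measure Pi on Omega *)
  (forall s, piw [] s = 1) /\
  (forall L s s', (forall x, In x L -> s x = s' x) -> piw L s = piw L s') /\
  (forall L L' s, Permutation L L' -> piw L s = piw L' s) /\
  (forall L y s, NoDup (y :: L) -> Forall (valid_site d) (y :: L) ->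
     piw L s = piw (y :: L) (upd s y true) + piw (y :: L) (upd s y false)) /\
  (* Pi << Pi_0 with bounded density *)
  (exists Kd, forall L s, NoDup L -> Forall (valid_site d) L ->
     0 <= piw L s <= Kd * (/ 2) ^ length L) /\
  (forall K g, depends_on (box d K) g ->
     integ piw (box d (K + Rr)) (Top d U P0 c eps Q0 Q1 K g) = integ piw (box d K) g) /\
  (forall L s, piw L (fun x => negb (s x)) = piw L s) /\
  (forall K g, depends_on (box d K) g -> integ piw (box d K) g = 0 ->
     normM M (box d (K + Rr)) (Top d U P0 c eps Q0 Q1 K g)
       <= mubar * normM M (box d K) g).

Definition updn (h : nat -> bool) (t : nat) (b : bool) : nat -> bool :=
  fun n => if Nat.eqb n t then b else h n.

Definition Psi (gam : list nat) (z : nat -> bool) : R := lprod (fun t => sg (z t)) gam.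

Definition depends_first (m : nat) (f : (nat -> bool) -> R) : Prop :=
  forall z z', (forall t, (t < m)%nat -> z t = z' t) -> f z = f z'.

(* all zeta in {+-1}^{0..m-1} (false beyond) *)
Fixpoint bseqs (m : nat) : list (nat -> bool) :=
  match m with
  | O => [fun _ => false]
  | S m' => flat_map (fun z => [updn z m' true; updn z m' false]) (bseqs m')
  end.

Definition wcoef (m : nat) (f : (nat -> bool) -> R) (gam : list nat) : R :=
  (/ 2) ^ m * lsum (fun z => f z * Psi gam z) (bseqs m).

Definition maxcoef (m : nat) (f : (nat -> bool) -> R) : R :=
  fold_right Rmax 0 (map (fun gam => Rabs (wcoef m f gam)) (subsets (seq 0 m))).

(* Ev k t hist x xi : expectation of f(zeta) given X_t = x, xi_t = xi, with
   zeta_0..zeta_{t-1} recorded in hist, when k further transitions of the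
   chain (X_t, xi_t) remain; only xi on the window B is tracked. *)
Fixpoint Ev (d : nat) (U : list Site) (P0 c : Site -> R) (eps : R)
    (Q0 Q1 : bool -> bool -> R) (B : list Site) (f : (nat -> bool) -> R)
    (k t : nat) (hist : nat -> bool) (x : Site) (xi : Config) : R :=
  let hist' := updn hist t (xi x) in
  match k with
  | O => f hist'
  | S k' =>
      lsum (fun u =>
        (P0 u + eps * c u * sg (xi x)) *
        lsum (fun xi' =>
          lprod (fun y => (if site_eq_dec y x then Q1 else Q0) (xi y) (xi' y)) B *
          Ev d U P0 c eps Q0 Q1 B f k' (S t) hist' (vadd x u) xi')
          (configs B)) U
  end.

(* G^(f)(eta) = E[f(zeta_0,...,zeta_{m-1}) | eta_0 = eta]; the walk stays in
   box d (Rr*m) up to time m-1, so this window suffices. *)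
Definition Gf (d : nat) (U : list Site) (Rr : nat) (P0 c : Site -> R) (eps : R)
    (Q0 Q1 : bool -> bool -> R) (m : nat) (f : (nat -> bool) -> R) (eta : Config) : R :=
  Ev d U P0 c eps Q0 Q1 (box d (Rr * m)) f (m - 1) 0 (fun _ => false) (origin d) eta.

Definition mustar (M mubar : R) : R := M * sqrt (mubar * (1 + 2 * mubar)).

(* The Walsh expansion of f reduces the claim to the functions G^(Psi_gamma).  These are
   computed backwards in time: with S the multiplication by eta(0) and T the transition
   operator, G^(Psi_gamma) = S^[0 in gamma] T S^[1 in gamma] T ... T S^[m-1 in gamma] 1.
   The dynamics commutes with the spin flip combined with the reflection x -> -x, so a
   product containing an odd number of factors S is odd under this symmetry and has mean
   zero under Pi.  Hence each T acting on it contracts by mubar, while S costs at most a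
   factor M in ||.||_M; tracking the mean and the centred part separately, two consecutive
   factors S cost M * mubar * M (1 + 2 mubar) = mu_star^2, so ||G^(Psi_gamma)||_M is
   O(mu_star^|gamma|), and summing over gamma gives (1 + mu_star)^m. *)

From Stdlib Require Import Reals List ZArith.
From Stdlib Require Import Lra Lia Permutation FunctionalExtensionality Classical.
Import ListNotations.
Open Scope R_scope.

Lemma lsum_nil {A} (f : A -> R) : lsum f [] = 0.
Proof. reflexivity. Qed.

Lemma lsum_cons {A} (f : A -> R) a l : lsum f (a :: l) = f a + lsum f l.
Proof. reflexivity. Qed.

Lemma lsum_app {A} (f : A -> R) l1 l2 : lsum f (l1 ++ l2) = lsum f l1 + lsum f l2.
Proof. induction l1 as [|a l1 IH]; cbn [app]; [rewrite lsum_nil; lra|]. rewrite !lsum_cons, IH. lra. Qed.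

Lemma lsum_map {A B} (f : B -> R) (g : A -> B) l : lsum f (map g l) = lsum (fun a => f (g a)) l.
Proof. induction l as [|a l IH]; auto. cbn [map]. rewrite !lsum_cons, IH. reflexivity. Qed.

Lemma lsum_flat_map {A B} (f : B -> R) (g : A -> list B) l :
  lsum f (flat_map g l) = lsum (fun a => lsum f (g a)) l.
Proof. induction l as [|a l IH]; auto. cbn [flat_map]. rewrite lsum_app, lsum_cons, IH. reflexivity. Qed.

Lemma lsum_ext {A} (f g : A -> R) l : (forall x, In x l -> f x = g x) -> lsum f l = lsum g l.
Proof.
  induction l as [|a l IH]; intros H; auto.
  rewrite !lsum_cons, (H a) by (left; auto). f_equal. apply IH. intros; apply H; right; auto.
Qed.

Lemma lsum_plus {A} (f g : A -> R) l : lsum (fun x => f x + g x) l = lsum f l + lsum g l.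
Proof. induction l as [|a l IH]; [cbn; lra|]. rewrite !lsum_cons, IH. lra. Qed.

Lemma lsum_scal {A} (c : R) (f : A -> R) l : lsum (fun x => c * f x) l = c * lsum f l.
Proof. induction l as [|a l IH]; [cbn; lra|]. rewrite !lsum_cons, IH. lra. Qed.

Lemma lsum_opp {A} (f : A -> R) l : lsum (fun x => - f x) l = - lsum f l.
Proof. induction l as [|a l IH]; [cbn; lra|]. rewrite !lsum_cons, IH. lra. Qed.

Lemma lsum_zero {A} (l : list A) : lsum (fun _ => 0) l = 0.
Proof. induction l as [|a l IH]; auto. rewrite lsum_cons, IH. lra. Qed.

Lemma lsum_le {A} (f g : A -> R) l : (forall x, In x l -> f x <= g x) -> lsum f l <= lsum g l.
Proof.
  induction l as [|a l IH]; intros H; [cbn; lra|]. rewrite !lsum_cons.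
  apply Rplus_le_compat; [apply H; left; auto|apply IH; intros; apply H; right; auto].
Qed.

Lemma lsum_nonneg {A} (f : A -> R) l : (forall x, In x l -> 0 <= f x) -> 0 <= lsum f l.
Proof. intros H. rewrite <- (lsum_zero l). apply lsum_le; auto. Qed.

Lemma lsum_abs {A} (f : A -> R) l : Rabs (lsum f l) <= lsum (fun x => Rabs (f x)) l.
Proof.
  induction l as [|a l IH]; [cbn; rewrite Rabs_R0; lra|]. rewrite !lsum_cons.
  eapply Rle_trans; [apply Rabs_triang|]. lra.
Qed.

Lemma lsum_perm {A} (f : A -> R) l l' : Permutation l l' -> lsum f l = lsum f l'.
Proof. induction 1; rewrite ?lsum_cons; lra. Qed.

Lemma lsum_swap {A B} (F : A -> B -> R) l1 l2 :
  lsum (fun a => lsum (fun b => F a b) l2) l1 = lsum (fun b => lsum (fun a => F a b) l1) l2.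
Proof.
  induction l1 as [|a l1 IH]; [symmetry; apply lsum_zero|].
  rewrite lsum_cons, IH, <- lsum_plus. apply lsum_ext; intros; rewrite lsum_cons; reflexivity.
Qed.

Lemma fold_max_ge (l : list R) x : In x l -> x <= fold_right Rmax 0 l.
Proof.
  induction l as [|a l IH]; simpl; [contradiction|]. intros [<-|H]; [apply Rmax_l|].
  eapply Rle_trans; [apply IH; auto|apply Rmax_r].
Qed.

Lemma lsum_subsets_pow {A} (l : list A) x :
  lsum (fun G => x ^ length G) (subsets l) = (1 + x) ^ length l.
Proof.
  induction l as [|a l IH]; cbn [subsets]; [cbn; lra|].
  rewrite lsum_app, lsum_map, IH. cbn [length pow]. rewrite lsum_scal, IH. ring.
Qed.

Lemma lprod_cons {A} (f : A -> R) a l : lprod f (a :: l) = f a * lprod f l.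
Proof. reflexivity. Qed.

Lemma lprod_map {A B} (f : B -> R) (g : A -> B) l : lprod f (map g l) = lprod (fun a => f (g a)) l.
Proof. induction l as [|a l IH]; auto. cbn [map]. rewrite !lprod_cons, IH. reflexivity. Qed.

Lemma lprod_ext {A} (f g : A -> R) l : (forall x, In x l -> f x = g x) -> lprod f l = lprod g l.
Proof.
  induction l as [|a l IH]; intros H; auto.
  rewrite !lprod_cons, (H a) by (left; auto). f_equal. apply IH. intros; apply H; right; auto.
Qed.

Lemma lprod_mult {A} (f g : A -> R) l : lprod (fun x => f x * g x) l = lprod f l * lprod g l.
Proof. induction l as [|a l IH]; [cbn; lra|]. rewrite !lprod_cons, IH. lra. Qed.

Lemma lprod_perm {A} (f : A -> R) l l' : Permutation l l' -> lprod f l = lprod f l'.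
Proof. induction 1; rewrite ?lprod_cons; try lra. rewrite IHPermutation; auto. Qed.

Lemma lprod_one {A} (l : list A) : lprod (fun _ => 1) l = 1.
Proof. induction l as [|a l IH]; auto. rewrite lprod_cons, IH. lra. Qed.

Lemma sg_sq b : sg b * sg b = 1.
Proof. destruct b; simpl; lra. Qed.

Lemma sg_neg b : sg (negb b) = - sg b.
Proof. destruct b; simpl; lra. Qed.

Lemma Rabs_sg b : Rabs (sg b) = 1.
Proof. destruct b; simpl; [apply Rabs_R1|]. rewrite Rabs_left; lra. Qed.

Lemma Rabs_lprod_sg {A} (s : A -> bool) G : Rabs (lprod (fun x => sg (s x)) G) = 1.
Proof.
  induction G as [|a G IH]; [apply Rabs_R1|].
  rewrite lprod_cons, Rabs_mult, Rabs_sg, IH. lra.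
Qed.

Lemma lprod_nil {A} (f : A -> R) : lprod f [] = 1.
Proof. reflexivity. Qed.

(* Spin configurations over an arbitrary index type, so that the environment (indexed by
   sites) and the path of zeta (indexed by times) share the Fourier-Walsh theory;
   [fourier_coef] and [fourier_norm] generalise [fcoef] and [normM]. *)
Section SpinSystems.
Context {A : Type} (dec : forall x y : A, {x = y} + {x <> y}).

Definition setspin (s : A -> bool) (y : A) (b : bool) : A -> bool :=
  fun x => if dec x y then b else s x.

Fixpoint spin_cfgs (l : list A) : list (A -> bool) :=
  match l with
  | [] => [fun _ => false]
  | y :: l' => flat_map (fun s => [setspin s y true; setspin s y false]) (spin_cfgs l')
  end.

Definition dep_on (l : list A) (g : (A -> bool) -> R) : Prop :=
  forall s s', (forall x, In x l -> s x = s' x) -> g s = g s'.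

Definition chi (G : list A) (s : A -> bool) : R := lprod (fun x => sg (s x)) G.

Definition fourier_coef (l : list A) (g : (A -> bool) -> R) (G : list A) : R :=
  (/ 2) ^ length l * lsum (fun s => g s * chi G s) (spin_cfgs l).

Definition fourier_norm (M : R) (l : list A) (g : (A -> bool) -> R) : R :=
  lsum (fun G => Rabs (fourier_coef l g G) * M ^ length G) (subsets l).

Lemma lsum_spin_cfgs_cons F y l :
  lsum F (spin_cfgs (y :: l)) = lsum (fun s => F (setspin s y true) + F (setspin s y false)) (spin_cfgs l).
Proof.
  cbn [spin_cfgs]. rewrite lsum_flat_map. apply lsum_ext; intros.
  unfold lsum; simpl. lra.
Qed.

Lemma lsum_spin_cfgs_nil F : lsum F (spin_cfgs []) = F (fun _ => false).
Proof. unfold lsum; simpl. lra. Qed.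

Lemma setspin_same s y b : setspin s y b y = b.
Proof. unfold setspin; destruct (dec y y); congruence. Qed.

Lemma setspin_other s y b x : x <> y -> setspin s y b x = s x.
Proof. unfold setspin; destruct (dec x y); congruence. Qed.

Lemma setspin_comm s x y a b : x <> y -> setspin (setspin s y a) x b = setspin (setspin s x b) y a.
Proof.
  intros H. apply functional_extensionality; intro z. unfold setspin.
  destruct (dec z x), (dec z y); subst; congruence.
Qed.

Lemma lsum_spin_cfgs_perm F l l' : Permutation l l' -> lsum F (spin_cfgs l) = lsum F (spin_cfgs l').
Proof.
  intros H. revert F. induction H; intros F.
  - reflexivity.
  - rewrite !lsum_spin_cfgs_cons. apply IHPermutation.
  - rewrite !lsum_spin_cfgs_cons. rewrite !lsum_plus.
    destruct (dec x y) as [->|Hxy].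
    + lra.
    + assert (E : forall a b s, setspin (setspin s y a) x b = setspin (setspin s x b) y a)
        by (intros; apply setspin_comm; auto).
      assert (E2 : forall a b, lsum (fun s => F (setspin (setspin s y a) x b)) (spin_cfgs l) =
                              lsum (fun s => F (setspin (setspin s x b) y a)) (spin_cfgs l))
        by (intros; apply lsum_ext; intros; rewrite E; auto).
      rewrite !E2. lra.
  - rewrite IHPermutation1. apply IHPermutation2.
Qed.

Lemma lprod_setspin_notin (h : A -> bool -> R) s y b l :
  ~ In y l -> lprod (fun x => h x (setspin s y b x)) l = lprod (fun x => h x (s x)) l.
Proof. intros H. apply lprod_ext. intros x Hx. rewrite setspin_other; auto. intro; subst; auto. Qed.

Lemma lsum_product_kernel (q : A -> bool -> R) l :
  NoDup l -> (forall y, q y true + q y false = 1) ->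
  lsum (fun s => lprod (fun y => q y (s y)) l) (spin_cfgs l) = 1.
Proof.
  intros Hl Hq. induction l.
  - rewrite lsum_spin_cfgs_nil. reflexivity.
  - inversion Hl; subst. rewrite lsum_spin_cfgs_cons.
    transitivity (lsum (fun s => (q a true + q a false) * lprod (fun y => q y (s y)) l) (spin_cfgs l)).
    + apply lsum_ext; intros s _. rewrite !lprod_cons, !setspin_same, !lprod_setspin_notin by auto. lra.
    + rewrite lsum_scal, IHl by auto. rewrite Hq. lra.
Qed.

Lemma dep_on_setspin l y F : dep_on (y :: l) F -> forall b, dep_on l (fun s => F (setspin s y b)).
Proof.
  intros H b s s' Hs. apply H. intros x [<-|Hx].
  - rewrite !setspin_same; auto.
  - unfold setspin. destruct (dec x y); auto.
Qed.

Lemma dep_on_nil F s s' : dep_on [] F -> F s = F s'.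
Proof. intros H; apply H; intros x []. Qed.

Lemma lsum_product_kernel_marginal (q : A -> bool -> R) l r F :
  NoDup (l ++ r) -> (forall y, q y true + q y false = 1) -> dep_on l F ->
  lsum (fun s => lprod (fun y => q y (s y)) (l ++ r) * F s) (spin_cfgs (l ++ r)) =
  lsum (fun s => lprod (fun y => q y (s y)) l * F s) (spin_cfgs l).
Proof.
  intros Hn Hq. revert F. induction l; intros F HF; simpl app in *.
  - rewrite lsum_spin_cfgs_nil. rewrite lprod_nil, Rmult_1_l.
    transitivity (lsum (fun s => F (fun _ => false) * lprod (fun y => q y (s y)) r) (spin_cfgs r)).
    + apply lsum_ext; intros. rewrite (dep_on_nil F x (fun _ => false)); auto. lra.
    + rewrite lsum_scal, lsum_product_kernel; auto. lra.
  - inversion Hn; subst. rewrite !lsum_spin_cfgs_cons.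
    set (F' := fun s => q a true * F (setspin s a true) + q a false * F (setspin s a false)).
    transitivity (lsum (fun s => lprod (fun y => q y (s y)) (l ++ r) * F' s) (spin_cfgs (l ++ r))).
    + apply lsum_ext; intros s _. unfold F'. rewrite !lprod_cons, !setspin_same,
        !lprod_setspin_notin by auto. lra.
    + rewrite IHl; auto.
      * apply lsum_ext; intros s _. unfold F'.
        rewrite !lprod_cons, !setspin_same, !lprod_setspin_notin; auto.
        lra. intro; apply H1; apply in_or_app; auto. intro; apply H1; apply in_or_app; auto.
      * intros s s' Hs. unfold F'. rewrite (dep_on_setspin l a F HF true s s'),
          (dep_on_setspin l a F HF false s s'); auto.
Qed.

Lemma lsum_spin_cfgs_reindex (psi : A -> A) (q : A -> bool -> R) L F :
  NoDup L -> (forall x y, In x L -> In y L -> psi x = psi y -> x = y) -> dep_on L F ->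
  lsum (fun xi => lprod (fun z => q (psi z) (xi (psi z))) L * F (fun z => xi (psi z)))
       (spin_cfgs (map psi L)) =
  lsum (fun s => lprod (fun z => q (psi z) (s z)) L * F s) (spin_cfgs L).
Proof.
  intros Hn Hi. revert F. induction L; intros F HF.
  - simpl map. rewrite !lsum_spin_cfgs_nil, !lprod_nil. reflexivity.
  - inversion Hn; subst. simpl map. rewrite !lsum_spin_cfgs_cons.
    set (F' := fun s => q (psi a) true * F (setspin s a true) + q (psi a) false * F (setspin s a false)).
    assert (Hne : forall z, In z L -> psi z <> psi a).
    { intros z Hz E. apply Hi in E; [subst; contradiction| right; auto | left; auto]. }
    transitivity (lsum (fun xi => lprod (fun z => q (psi z) (xi (psi z))) L * F' (fun z => xi (psi z)))
                       (spin_cfgs (map psi L))).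
    + apply lsum_ext; intros xi _. unfold F'. rewrite !lprod_cons, !setspin_same.
      assert (E : forall b, lprod (fun z => q (psi z) (setspin xi (psi a) b (psi z))) L =
                            lprod (fun z => q (psi z) (xi (psi z))) L).
      { intros b. apply lprod_ext. intros z Hz. rewrite setspin_other; auto. }
      rewrite !E.
      assert (E2 : forall b, F (fun z => setspin xi (psi a) b (psi z)) =
                             F (setspin (fun z => xi (psi z)) a b)).
      { intros b. apply HF. intros z [<-|Hz]. rewrite setspin_same, setspin_same. auto.
        rewrite setspin_other by auto. rewrite setspin_other; auto. intro; subst; contradiction. }
      rewrite !E2. lra.
    + rewrite IHL; auto.
      * apply lsum_ext; intros s _. unfold F'. rewrite !lprod_cons, !setspin_same,
          !(lprod_setspin_notin (fun z b => q (psi z) b)) by auto. lra.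
      * intros x y Hx Hy; apply Hi; right; auto.
      * intros s s' Hs. unfold F'. rewrite (dep_on_setspin L a F HF true s s'),
          (dep_on_setspin L a F HF false s s'); auto.
Qed.

Lemma lsum_spin_cfgs_negb l F : dep_on l F ->
  lsum F (spin_cfgs l) = lsum (fun s => F (fun x => negb (s x))) (spin_cfgs l).
Proof.
  revert F. induction l; intros F HF.
  - rewrite !lsum_spin_cfgs_nil. apply HF. intros x [].
  - rewrite !lsum_spin_cfgs_cons.
    set (H := fun s => F (setspin s a true) + F (setspin s a false)).
    assert (HH : dep_on l H).
    { intros s s' Hs. unfold H. rewrite (dep_on_setspin l a F HF true s s'),
        (dep_on_setspin l a F HF false s s'); auto. }
    transitivity (lsum H (spin_cfgs l)); [reflexivity|]. rewrite (IHl H HH).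
    apply lsum_ext; intros s _. unfold H.
    assert (E : forall b, (fun x => negb (setspin s a b x)) = setspin (fun x => negb (s x)) a (negb b)).
    { intros b; apply functional_extensionality; intro x. unfold setspin; destruct (dec x a); auto. }
    rewrite !E. simpl. lra.
Qed.

Lemma subsets_incl (l G : list A) : In G (subsets l) -> incl G l.
Proof.
  revert G. induction l; intros G HG; simpl in HG.
  - destruct HG as [<-|[]]. intros x [].
  - apply in_app_or in HG. destruct HG as [HG|HG].
    + intros x Hx. right. apply (IHl G HG); auto.
    + apply in_map_iff in HG. destruct HG as [G' [<- HG']]. 
      intros x [<-|Hx]; [left; auto|right; apply (IHl G' HG'); auto].
Qed.

Lemma subsets_nodup (l G : list A) : NoDup l -> In G (subsets l) -> NoDup G.
Proof.
  revert G. induction l; intros G Hn HG; simpl in HG.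
  - destruct HG as [<-|[]]. constructor.
  - inversion Hn; subst. apply in_app_or in HG. destruct HG as [HG|HG]; auto.
    apply in_map_iff in HG. destruct HG as [G' [<- HG']]. constructor; auto.
    intro Ha. apply H1. apply (subsets_incl l G' HG'); auto.
Qed.

Lemma lsum_chi (l G : list A) : NoDup l -> In G (subsets l) ->
  lsum (chi G) (spin_cfgs l) = match G with [] => 2 ^ length l | _ => 0 end.
Proof.
  revert G. induction l; intros G Hn HG.
  - simpl in HG. destruct HG as [<-|[]]. rewrite lsum_spin_cfgs_nil. reflexivity.
  - inversion Hn; subst. rewrite lsum_spin_cfgs_cons. simpl in HG.
    apply in_app_or in HG. destruct HG as [HG|HG].
    + assert (Hna : ~ In a G) by (intro; apply H1; apply (subsets_incl l G HG); auto).
      transitivity (lsum (fun s => 2 * chi G s) (spin_cfgs l)).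
      * apply lsum_ext; intros s _. unfold chi.
        rewrite !(lprod_setspin_notin (fun _ b => sg b)) by auto. lra.
      * rewrite lsum_scal, IHl; auto. destruct G; simpl; lra.
    + apply in_map_iff in HG. destruct HG as [G' [<- HG']].
      assert (Hna : ~ In a G') by (intro; apply H1; apply (subsets_incl l G' HG'); auto).
      transitivity (lsum (fun s => 0) (spin_cfgs l)).
      * apply lsum_ext; intros s _. unfold chi. rewrite !lprod_cons, !setspin_same.
        rewrite !(lprod_setspin_notin (fun _ b => sg b)) by auto. simpl. lra.
      * apply lsum_zero.
Qed.

Lemma lsum_subsets_chi_mul l s s0 :
  lsum (fun G => chi G s * chi G s0) (subsets l) = lprod (fun x => 1 + sg (s x) * sg (s0 x)) l.
Proof.
  induction l; cbn [subsets].
  - rewrite lsum_cons, lsum_nil. unfold chi; rewrite !lprod_nil. lra.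
  - rewrite lsum_app, lsum_map, IHl. rewrite lprod_cons.
    transitivity (lprod (fun x => 1 + sg (s x) * sg (s0 x)) l +
      sg (s a) * sg (s0 a) * lsum (fun G => chi G s * chi G s0) (subsets l)).
    + f_equal. rewrite <- lsum_scal. apply lsum_ext; intros. unfold chi; rewrite !lprod_cons. lra.
    + rewrite IHl. lra.
Qed.

Lemma lsum_spin_cfgs_delta l g s0 : NoDup l -> dep_on l g ->
  lsum (fun s => g s * lprod (fun x => 1 + sg (s x) * sg (s0 x)) l) (spin_cfgs l) = 2 ^ length l * g s0.
Proof.
  revert g. induction l; intros g Hn Hg.
  - rewrite lsum_spin_cfgs_nil. unfold lprod; simpl. rewrite (dep_on_nil g (fun _ => false) s0 Hg). lra.
  - inversion Hn; subst. rewrite lsum_spin_cfgs_cons.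
    set (g' := fun s => 2 * g (setspin s a (s0 a))).
    transitivity (lsum (fun s => g' s * lprod (fun x => 1 + sg (s x) * sg (s0 x)) l) (spin_cfgs l)).
    + apply lsum_ext; intros s _. unfold g'. rewrite !lprod_cons, !setspin_same.
      rewrite !(lprod_setspin_notin (fun x b => 1 + sg b * sg (s0 x))) by auto.
      destruct (s0 a); simpl; lra.
    + rewrite IHl; auto.
      * unfold g'. replace (setspin s0 a (s0 a)) with s0.
        cbn [length pow]. lra.
        apply functional_extensionality; intro x; unfold setspin; destruct (dec x a); subst; auto.
      * intros s s' Hs. unfold g'. f_equal. apply Hg. intros x [<-|Hx].
        rewrite !setspin_same; auto. unfold setspin; destruct (dec x a); auto.
Qed.

Lemma fourier_inversion l g s0 : NoDup l -> dep_on l g ->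
  g s0 = lsum (fun G => fourier_coef l g G * chi G s0) (subsets l).
Proof.
  intros Hn Hg. unfold fourier_coef.
  transitivity (lsum (fun G => (/2) ^ length l * lsum (fun s => g s * (chi G s * chi G s0)) (spin_cfgs l))
                     (subsets l)).
  2: { apply lsum_ext; intros. rewrite Rmult_assoc. f_equal. rewrite Rmult_comm, <- lsum_scal.
       apply lsum_ext; intros. lra. }
  rewrite lsum_scal.
  transitivity ((/2) ^ length l * lsum (fun s => g s * lprod (fun x => 1 + sg (s x) * sg (s0 x)) l)
      (spin_cfgs l)).
  - rewrite lsum_spin_cfgs_delta; auto. rewrite <- Rmult_assoc, <- Rpow_mult_distr.
    replace (/2 * 2) with 1 by lra. rewrite pow1. lra.
  - f_equal. rewrite lsum_swap. apply lsum_ext; intros s _.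
    rewrite <- lsum_subsets_chi_mul, <- lsum_scal. reflexivity.
Qed.

Lemma fourier_coef_lin l g1 g2 a b G :
  fourier_coef l (fun s => a * g1 s + b * g2 s) G = a * fourier_coef l g1 G + b * fourier_coef l g2 G.
Proof.
  unfold fourier_coef.
  transitivity ((/2) ^ length l * (a * lsum (fun s => g1 s * chi G s) (spin_cfgs l) +
                                   b * lsum (fun s => g2 s * chi G s) (spin_cfgs l))); [|lra].
  f_equal. rewrite <- !lsum_scal, <- lsum_plus. apply lsum_ext; intros; lra.
Qed.

Lemma fourier_coef_lsum {I} l (F : I -> (A -> bool) -> R) (Is : list I) G :
  fourier_coef l (fun s => lsum (fun i => F i s) Is) G = lsum (fun i => fourier_coef l (F i) G) Is.
Proof.
  unfold fourier_coef. rewrite lsum_scal. f_equal. rewrite (lsum_swap (fun i s => F i s * chi G s)).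
  apply lsum_ext; intros s _.
  rewrite Rmult_comm, <- lsum_scal. apply lsum_ext; intros; lra.
Qed.

Lemma fourier_norm_ge0 M l g : 0 <= M -> 0 <= fourier_norm M l g.
Proof.
  intros HM. unfold fourier_norm. apply lsum_nonneg. intros.
  apply Rmult_le_pos; [apply Rabs_pos| apply pow_le; auto].
Qed.

Lemma fourier_norm_lsum_le {I} M l (F : I -> (A -> bool) -> R) (Is : list I) : 0 <= M ->
  fourier_norm M l (fun s => lsum (fun i => F i s) Is) <= lsum (fun i => fourier_norm M l (F i)) Is.
Proof.
  intros HM. unfold fourier_norm. rewrite lsum_swap. apply lsum_le; intros G _.
  rewrite fourier_coef_lsum.
  rewrite (lsum_ext (fun i => Rabs (fourier_coef l (F i) G) * M ^ length G)
                    (fun i => M ^ length G * Rabs (fourier_coef l (F i) G))) by (intros; lra).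
  rewrite lsum_scal, Rmult_comm. apply Rmult_le_compat_l; [apply pow_le; auto|].
  eapply Rle_trans; [apply lsum_abs|]. apply lsum_le; intros; apply Rle_refl.
Qed.

Lemma fourier_norm_lin_le M l g1 g2 a b : 0 <= M ->
  fourier_norm M l (fun s => a * g1 s + b * g2 s) <=
  Rabs a * fourier_norm M l g1 + Rabs b * fourier_norm M l g2.
Proof.
  intros HM. unfold fourier_norm. rewrite <- !lsum_scal, <- lsum_plus. apply lsum_le; intros G _.
  rewrite fourier_coef_lin. assert (0 <= M ^ length G) by (apply pow_le; auto).
  eapply Rle_trans. apply Rmult_le_compat_r; auto. apply Rabs_triang.
  rewrite !Rabs_mult. lra.
Qed.

Lemma fourier_norm_scal M l g a : fourier_norm M l (fun s => a * g s) = Rabs a * fourier_norm M l g.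
Proof.
  unfold fourier_norm. rewrite <- lsum_scal. apply lsum_ext; intros G _.
  replace (fourier_coef l (fun s => a * g s) G) with (a * fourier_coef l g G).
  rewrite Rabs_mult. lra.
  unfold fourier_coef.
  rewrite (lsum_ext (fun s => a * g s * chi G s) (fun s => a * (g s * chi G s))) by (intros; lra).
  rewrite lsum_scal. lra.
Qed.

Lemma fourier_norm_ext M l g1 g2 : (forall s, g1 s = g2 s) -> fourier_norm M l g1 = fourier_norm M l g2.
Proof. intros H. replace g2 with g1; auto. apply functional_extensionality; auto. Qed.

Lemma fourier_coef_const l a G : NoDup l -> In G (subsets l) ->
  fourier_coef l (fun _ => a) G = match G with [] => a | _ => 0 end.
Proof.
  intros Hn HG. unfold fourier_coef. rewrite lsum_scal. rewrite (lsum_chi l G Hn HG).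
  destruct G; [|lra]. rewrite <- Rmult_assoc, (Rmult_comm _ a), Rmult_assoc, <- Rpow_mult_distr.
  replace (/2 * 2) with 1 by lra. rewrite pow1. lra.
Qed.

Lemma lsum_subsets_nil_only (l : list A) (c : R) (F : list A -> R) :
  (forall G, G <> [] -> F G = 0) -> F [] = c -> lsum F (subsets l) = c.
Proof.
  intros H0 H1. induction l; cbn [subsets].
  - rewrite lsum_cons, lsum_nil, H1. lra.
  - rewrite lsum_app, IHl, lsum_map. rewrite (lsum_ext _ (fun _ => 0)). rewrite lsum_zero. lra.
    intros; apply H0; discriminate.
Qed.

Lemma fourier_norm_const M l a : NoDup l -> fourier_norm M l (fun _ => a) = Rabs a.
Proof.
  intros Hn. unfold fourier_norm.
  rewrite (lsum_ext _ (fun G => match G with [] => Rabs a | _ => 0 end)).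
  - apply lsum_subsets_nil_only; auto. intros [|x G] H; [congruence|auto].
  - intros G HG. rewrite fourier_coef_const; auto. destruct G; simpl. lra. rewrite Rabs_R0; lra.
Qed.

Lemma Rabs_le_fourier_norm M l g s : NoDup l -> dep_on l g -> 1 <= M -> Rabs (g s) <= fourier_norm M l g.
Proof.
  intros Hn Hg HM. rewrite (fourier_inversion l g s Hn Hg). unfold fourier_norm.
  eapply Rle_trans; [apply lsum_abs|]. apply lsum_le; intros G _.
  rewrite Rabs_mult. unfold chi. rewrite Rabs_lprod_sg, Rmult_1_r.
  assert (1 <= M ^ length G) by (apply pow_R1_Rle; auto).
  assert (0 <= Rabs (fourier_coef l g G)) by apply Rabs_pos. nra.
Qed.

Lemma lsum_subsets_perm (F : list A -> R) l l' :
  (forall G G', Permutation G G' -> F G = F G') -> Permutation l l' ->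
  lsum F (subsets l) = lsum F (subsets l').
Proof.
  intros HF H. revert F HF. induction H; intros F HF; cbn [subsets].
  - reflexivity.
  - rewrite !lsum_app, !lsum_map. rewrite (IHPermutation F HF), (IHPermutation (fun a => F (x :: a))); auto.
  - rewrite !lsum_app, !lsum_map, !lsum_app, !lsum_map.
    rewrite (lsum_ext (fun a => F (x :: y :: a)) (fun a => F (y :: x :: a))). lra.
    intros; apply HF; constructor.
  - rewrite (IHPermutation1 F HF). apply IHPermutation2; auto.
Qed.

Lemma fourier_norm_perm M l l' g : Permutation l l' -> fourier_norm M l g = fourier_norm M l' g.
Proof.
  intros H. unfold fourier_norm.
  assert (E : forall G, fourier_coef l g G = fourier_coef l' g G).
  { intros G. unfold fourier_coef. rewrite (Permutation_length H). f_equal.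
    apply lsum_spin_cfgs_perm; auto. }
  rewrite (lsum_ext _ (fun G => Rabs (fourier_coef l' g G) * M ^ length G)) by (intros; rewrite E; auto).
  apply lsum_subsets_perm; auto. intros G G' HG. rewrite (Permutation_length HG). f_equal. f_equal.
  unfold fourier_coef. f_equal. apply lsum_ext; intros. unfold chi. rewrite (lprod_perm _ _ _ HG). auto.
Qed.

Lemma fourier_norm_spin_mul_le M l g o : NoDup l -> In o l -> 1 <= M ->
  fourier_norm M l (fun s => sg (s o) * g s) <= M * fourier_norm M l g.
Proof.
  intros Hn Ho HM. destruct (in_split _ _ Ho) as [l1 [l2 ->]].
  assert (Hp : Permutation (l1 ++ o :: l2) (o :: l1 ++ l2)) by (symmetry; apply Permutation_middle).
  rewrite !(fourier_norm_perm M _ _ _ Hp). set (l' := l1 ++ l2).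
  assert (Hn' : NoDup (o :: l')) by (apply (Permutation_NoDup Hp); auto).
  unfold fourier_norm. cbn [subsets]. rewrite !lsum_app, !lsum_map.
  set (g' := fun s => sg (s o) * g s).
  assert (E1 : forall G, fourier_coef (o :: l') g' G = fourier_coef (o :: l') g (o :: G)).
  { intros G; unfold fourier_coef. f_equal. apply lsum_ext; intros. unfold g', chi; rewrite lprod_cons. lra. }
  assert (E2 : forall G, fourier_coef (o :: l') g (o :: o :: G) = fourier_coef (o :: l') g G).
  { intros G; unfold fourier_coef. f_equal. apply lsum_ext; intros. unfold chi; rewrite !lprod_cons.
    rewrite <- (Rmult_assoc (sg (x o)) (sg (x o))), sg_sq, Rmult_1_l. reflexivity. }
  rewrite (lsum_ext (fun G => Rabs (fourier_coef (o :: l') g' G) * M ^ length G)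
                    (fun G => Rabs (fourier_coef (o :: l') g (o :: G)) * M ^ length G))
    by (intros; rewrite E1; auto).
  rewrite (lsum_ext (fun G => Rabs (fourier_coef (o :: l') g' (o :: G)) * M ^ length (o :: G))
                    (fun G => M * (Rabs (fourier_coef (o :: l') g G) * M ^ length G)))
    by (intros; rewrite E1, E2; simpl; lra).
  rewrite lsum_scal.
  enough (lsum (fun G => Rabs (fourier_coef (o :: l') g (o :: G)) * M ^ length G) (subsets l') <=
          M * lsum (fun G => Rabs (fourier_coef (o :: l') g (o :: G)) * M ^ length (o :: G)) (subsets l'))
    by lra.
  rewrite <- lsum_scal. apply lsum_le; intros G _. cbn [length pow].
  set (a := Rabs (fourier_coef (o :: l') g (o :: G))).
  replace (M * (a * (M * M ^ length G))) with (a * ((M * M) * M ^ length G)) by ring.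
  apply Rmult_le_compat_l; [apply Rabs_pos|].
  assert (1 <= M ^ length G) by (apply pow_R1_Rle; lra).
  rewrite <- (Rmult_1_l (M ^ length G)) at 1. apply Rmult_le_compat_r; nra.
Qed.

End SpinSystems.

Lemma nodup_map_inj {A B} (f : A -> B) l :
  (forall x y, In x l -> In y l -> f x = f y -> x = y) -> NoDup l -> NoDup (map f l).
Proof.
  induction l; intros Hi Hn; simpl; constructor.
  - inversion Hn; subst. intro H. apply in_map_iff in H. destruct H as [y [E Hy]].
    apply Hi in E; [subst; contradiction|right|left]; auto.
  - inversion Hn; subst. apply IHl; auto. intros; apply Hi; auto; right; auto.
Qed.

Lemma nodup_flat_map {A B} (f : A -> list B) l :
  NoDup l -> (forall a, In a l -> NoDup (f a)) ->
  (forall a b x, In a l -> In b l -> In x (f a) -> In x (f b) -> a = b) -> NoDup (flat_map f l).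
Proof.
  induction l; intros Hn Hf Hd; simpl; [constructor|]. inversion Hn; subst.
  apply NoDup_app; auto. apply Hf; left; auto. apply IHl; auto.
  intros; apply Hf; right; auto. intros; apply (Hd a0 b x); auto; right; auto.
  intros x Hx Hx'. apply in_flat_map in Hx'. destruct Hx' as [b [Hb Hxb]].
  assert (a = b) by (apply (Hd a b x); auto; [left|right]; auto). subst; contradiction.
Qed.

Lemma in_zrange K z : In z (zrange K) <-> (Z.abs z <= Z.of_nat K)%Z.
Proof.
  unfold zrange. rewrite in_map_iff. split.
  - intros [n [<- Hn]]. apply in_seq in Hn. lia.
  - intros H. exists (Z.to_nat (z + Z.of_nat K)). split. lia. apply in_seq. lia.
Qed.

Lemma nodup_zrange K : NoDup (zrange K).
Proof. unfold zrange. apply nodup_map_inj. intros; lia. apply seq_NoDup. Qed.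

Lemma in_box_iff d K x : In x (box d K) <-> length x = d /\ in_box K x.
Proof.
  revert x. induction d; intros x; simpl.
  - split. intros [<-|[]]. split; auto; constructor.
    intros [H _]. destruct x; [auto|discriminate].
  - rewrite in_flat_map. split.
    + intros [z [Hz Hx]]. apply in_map_iff in Hx. destruct Hx as [x' [<- Hx']].
      apply IHd in Hx'. destruct Hx'. simpl. split; auto. constructor; auto. apply in_zrange; auto.
    + intros [Hl Hb]. destruct x as [|z x']; [discriminate|]. inversion Hb; subst.
      exists z. split. apply in_zrange; auto. apply in_map. apply IHd. split; auto.
Qed.

Lemma nodup_box d K : NoDup (box d K).
Proof.
  induction d; simpl. constructor; auto. constructor.
  apply nodup_flat_map. apply nodup_zrange.
  intros; apply nodup_map_inj; auto. intros x y _ _ E; inversion E; auto.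
  intros a b x _ _ Ha Hb. apply in_map_iff in Ha, Hb. destruct Ha as [? [<- _]]. destruct Hb as [? [E _]].
  inversion E; auto.
Qed.

Lemma box_valid d K x : In x (box d K) -> valid_site d x.
Proof. intros H; apply in_box_iff in H; apply H. Qed.

Lemma origin_len d : length (origin d) = d.
Proof. unfold origin. apply repeat_length. Qed.

Lemma origin_in_box d K : In (origin d) (box d K).
Proof.
  apply in_box_iff. split. apply origin_len. unfold in_box, origin.
  apply Forall_forall. intros z Hz. apply repeat_spec in Hz. subst. lia.
Qed.

Lemma vadd_len x y : length x = length y -> length (vadd x y) = length x.
Proof. revert y; induction x; intros [|b y] H; simpl in *; try discriminate; auto. Qed.

Lemma vadd_assoc x y z : length x = length y -> length y = length z ->
  vadd (vadd x y) z = vadd x (vadd y z).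
Proof.
  revert y z; induction x; intros [|b y] [|c z] H1 H2; simpl in *; try discriminate; auto.
  f_equal. lia. apply IHx; lia.
Qed.

Lemma vadd_origin_r x : vadd x (origin (length x)) = x.
Proof. induction x; simpl; auto. f_equal; auto. lia. Qed.

Lemma vadd_origin_l x : vadd (origin (length x)) x = x.
Proof. induction x; simpl; auto. f_equal; auto. Qed.

Lemma vadd_cancel w z z' : length w = length z -> length w = length z' ->
  vadd w z = vadd w z' -> z = z'.
Proof.
  revert z z'; induction w; intros [|b z] [|c z'] H1 H2 E; simpl in *; try discriminate; auto.
  inversion E. f_equal. lia. apply IHw; auto.
Qed.

Lemma vadd_eq_self x y : length x = length y -> vadd x y = x -> y = origin (length x).
Proof.
  intros H E. apply (vadd_cancel x); [auto | rewrite origin_len; auto | rewrite E, vadd_origin_r; auto].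
Qed.

Lemma vadd_in_box a b x y : length x = length y -> in_box a x -> in_box b y -> in_box (a + b) (vadd x y).
Proof.
  unfold in_box. revert y; induction x; intros [|c y] H Hx Hy; simpl in *; try discriminate; auto.
  inversion Hx; inversion Hy; subst. constructor. lia. apply IHx; auto.
Qed.

Lemma vneg_len x : length (vneg x) = length x.
Proof. unfold vneg; apply length_map. Qed.

Lemma vneg_vneg x : vneg (vneg x) = x.
Proof. unfold vneg. rewrite map_map. induction x; simpl; auto. f_equal; auto. lia. Qed.

Lemma vneg_in_box K x : in_box K x -> in_box K (vneg x).
Proof.
  unfold in_box, vneg. rewrite !Forall_forall. intros H z Hz. apply in_map_iff in Hz.
  destruct Hz as [w [<- Hw]]. specialize (H w Hw). lia.
Qed.

Lemma vneg_vadd x y : vneg (vadd x y) = vadd (vneg x) (vneg y).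
Proof. revert y; induction x; intros [|b y]; simpl; auto. f_equal; auto. lia. Qed.

Lemma vneg_origin d : vneg (origin d) = origin d.
Proof. unfold vneg, origin. induction d; simpl; auto. rewrite IHd. reflexivity. Qed.

Lemma vneg_box d K x : In x (box d K) -> In (vneg x) (box d K).
Proof.
  intros H. apply in_box_iff in H. apply in_box_iff. rewrite vneg_len. destruct H; split; auto.
  apply vneg_in_box; auto.
Qed.

Lemma box_perm_vneg d K : Permutation (map vneg (box d K)) (box d K).
Proof.
  apply Permutation_map_same_l. apply nodup_map_inj. intros x y _ _ E.
  rewrite <- (vneg_vneg x), <- (vneg_vneg y), E; auto. apply nodup_box.
  intros x Hx. apply in_map_iff in Hx. destruct Hx as [y [<- Hy]]. apply vneg_box; auto.
Qed.

Lemma box_mono d K K' x : (K <= K')%nat -> In x (box d K) -> In x (box d K').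
Proof.
  intros HK H. apply in_box_iff in H. apply in_box_iff. destruct H; split; auto.
  unfold in_box in *. rewrite Forall_forall in *. intros z Hz. specialize (H0 z Hz). lia.
Qed.

Lemma in_box_vadd d a b x y : In x (box d a) -> In y (box d b) -> In (vadd x y) (box d (a + b)).
Proof.
  intros Hx Hy. apply in_box_iff in Hx, Hy. destruct Hx, Hy. apply in_box_iff. split.
  rewrite vadd_len; lia.
  apply vadd_in_box; auto; lia.
Qed.

Notation site_cfgs := (spin_cfgs site_eq_dec).

Lemma configs_spin_cfgs L : configs L = site_cfgs L.
Proof. induction L; simpl; auto. Qed.

Lemma fcoef_fourier_coef L g G : fcoef L g G = fourier_coef site_eq_dec L g G.
Proof. unfold fcoef, fourier_coef. rewrite configs_spin_cfgs. reflexivity. Qed.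

Lemma normM_fourier_norm M L g : normM M L g = fourier_norm site_eq_dec M L g.
Proof. unfold normM, fourier_norm. apply lsum_ext; intros. rewrite fcoef_fourier_coef. reflexivity. Qed.

Lemma lsum_eq_on_supports {A} (F : A -> R) l1 l2 : NoDup l1 -> NoDup l2 ->
  (forall x, In x l1 -> ~ In x l2 -> F x = 0) -> (forall x, In x l2 -> ~ In x l1 -> F x = 0) ->
  lsum F l1 = lsum F l2.
Proof.
  revert l2. induction l1 as [|a l1 IH]; intros l2 H1 H2 Ha Hb.
  - rewrite lsum_nil. rewrite (lsum_ext _ (fun _ => 0)). rewrite lsum_zero; auto.
    intros; apply Hb; auto.
  - inversion H1; subst. rewrite lsum_cons. destruct (classic (In a l2)) as [Hin|Hnin].
    + destruct (in_split _ _ Hin) as [p [q ->]].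
      assert (Hp : Permutation (p ++ a :: q) (a :: p ++ q)) by (symmetry; apply Permutation_middle).
      rewrite (lsum_perm _ _ _ Hp), lsum_cons. f_equal.
      assert (Hn2 : NoDup (a :: p ++ q)) by (apply (Permutation_NoDup Hp); auto).
      inversion Hn2; subst.
      apply IH; auto.
      * intros x Hx Hx'. apply Ha. right; auto. intro Hx2. apply (Permutation_in _ Hp) in Hx2.
        destruct Hx2 as [<-|]; auto.
      * intros x Hx Hx'. apply Hb. apply (Permutation_in _ (Permutation_sym Hp)). right; auto.
        intros Hc; destruct Hc as [<-|]; auto.
    + rewrite Ha by (auto using in_eq). rewrite Rplus_0_l. apply IH; auto.
      * intros x Hx Hx'. apply Ha; auto. right; auto.
      * intros x Hx Hx'. apply Hb; auto. intros Hc; destruct Hc as [<-|]; auto.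
Qed.

Lemma lsum_vneg (F : Site -> R) U : NoDup U -> (forall u, ~ In u U -> F u = 0) ->
  (forall u, ~ In (vneg u) U -> F u = 0) ->
  lsum (fun u => F (vneg u)) U = lsum F U.
Proof.
  intros Hn HF HF2. rewrite <- (lsum_map F vneg). apply lsum_eq_on_supports; auto.
  apply nodup_map_inj; auto. intros x y _ _ E. rewrite <- (vneg_vneg x), <- (vneg_vneg y), E; auto.
  intros x Hx Hx'. apply HF2. intro H. apply Hx'. rewrite <- (vneg_vneg x). apply in_map; auto.
Qed.

Lemma sym_stoch_negb Q a b : sym_stoch Q -> Q (negb a) (negb b) = Q a b.
Proof.
  intros [H0 [H1 H2]]. pose proof (H1 true); pose proof (H1 false).
  destruct a, b; simpl; lra.
Qed.

Lemma sym_stoch_negb_r Q a b : sym_stoch Q -> Q a (negb b) = Q (negb a) b.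
Proof. intros H. rewrite <- (sym_stoch_negb Q a (negb b) H). rewrite Bool.negb_involutive. auto. Qed.

Definition rflip (s : Config) : Config := fun x => negb (s (vneg x)).

Lemma rflip_involutive s : rflip (rflip s) = s.
Proof.
  apply functional_extensionality; intro x. unfold rflip. rewrite vneg_vneg, Bool.negb_involutive. auto.
Qed.

Lemma dep_on_box_rflip d K F : dep_on (box d K) F -> dep_on (box d K) (fun s => F (rflip s)).
Proof. intros H s s' Hs. apply H. intros x Hx. unfold rflip. f_equal. apply Hs. apply vneg_box; auto. Qed.

Lemma lsum_box_cfgs_rflip d K F : dep_on (box d K) F ->
  lsum F (site_cfgs (box d K)) = lsum (fun s => F (rflip s)) (site_cfgs (box d K)).
Proof.
  intros HF. rewrite (lsum_spin_cfgs_negb site_eq_dec _ F HF).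
  set (F' := fun s : Config => F (fun x => negb (s x))).
  assert (HF' : dep_on (box d K) F').
  { intros s s' Hs. unfold F'. apply HF. intros x Hx. rewrite Hs; auto. }
  change (lsum F' (site_cfgs (box d K)) = lsum (fun s => F' (fun x => s (vneg x))) (site_cfgs (box d K))).
  pose proof (lsum_spin_cfgs_reindex site_eq_dec vneg (fun _ _ => /2) (box d K) F' (nodup_box d K)) as R.
  rewrite (lsum_spin_cfgs_perm site_eq_dec _ _ _ (box_perm_vneg d K)) in R.
  assert (Hi : forall x y, In x (box d K) -> In y (box d K) -> vneg x = vneg y -> x = y).
  { intros x y _ _ E. rewrite <- (vneg_vneg x), <- (vneg_vneg y), E; auto. }
  specialize (R Hi HF'). rewrite !lsum_scal in R.
  assert (Hp : 0 < lprod (fun _ : Site => /2) (box d K)).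
  { clear. induction (box d K); simpl; unfold lprod in *; simpl; lra. }
  apply Rmult_eq_reg_l in R; [|lra]. auto.
Qed.

Definition Qat d (Q0 Q1 : bool -> bool -> R) (y : Site) : bool -> bool -> R :=
  if site_eq_dec y (origin d) then Q1 else Q0.

Definition Tjump d Q0 Q1 K (g : Config -> R) (u : Site) (e : Config) : R :=
  lsum (fun s => g s * lprod (fun x => Qat d Q0 Q1 (vadd u x) (e (vadd u x)) (s x)) (box d K))
       (site_cfgs (box d K)).

Lemma Top_Tjump d U P0 c eps Q0 Q1 K g e :
  Top d U P0 c eps Q0 Q1 K g e =
  lsum (fun u => (P0 u + eps * c u * sg (e (origin d))) * Tjump d Q0 Q1 K g u e) U.
Proof. unfold Top, Tjump. apply lsum_ext; intros. rewrite configs_spin_cfgs. reflexivity. Qed.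

Lemma Tjump_lin d Q0 Q1 K g1 g2 a b u e :
  Tjump d Q0 Q1 K (fun s => a * g1 s + b * g2 s) u e =
  a * Tjump d Q0 Q1 K g1 u e + b * Tjump d Q0 Q1 K g2 u e.
Proof. unfold Tjump. rewrite <- !lsum_scal, <- lsum_plus. apply lsum_ext; intros; ring. Qed.

Lemma Top_lin d U P0 c eps Q0 Q1 K g1 g2 a b e :
  Top d U P0 c eps Q0 Q1 K (fun s => a * g1 s + b * g2 s) e =
  a * Top d U P0 c eps Q0 Q1 K g1 e + b * Top d U P0 c eps Q0 Q1 K g2 e.
Proof.
  rewrite !Top_Tjump, <- !lsum_scal, <- lsum_plus. apply lsum_ext; intros u _.
  rewrite Tjump_lin. ring.
Qed.

Lemma Top_ext d U P0 c eps Q0 Q1 K g1 g2 e : (forall s, g1 s = g2 s) ->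
  Top d U P0 c eps Q0 Q1 K g1 e = Top d U P0 c eps Q0 Q1 K g2 e.
Proof. intros H. replace g2 with g1; auto. apply functional_extensionality; auto. Qed.

Lemma Qat_row_sum d Q0 Q1 y a : sym_stoch Q0 -> sym_stoch Q1 ->
  Qat d Q0 Q1 y a true + Qat d Q0 Q1 y a false = 1.
Proof. intros [_ [H0 _]] [_ [H1 _]]. unfold Qat. destruct site_eq_dec; auto. Qed.

Lemma Tjump_const d Q0 Q1 K a u e : sym_stoch Q0 -> sym_stoch Q1 ->
  Tjump d Q0 Q1 K (fun _ => a) u e = a.
Proof.
  intros H0 H1. unfold Tjump. rewrite lsum_scal.
  rewrite (lsum_product_kernel site_eq_dec (fun x b => Qat d Q0 Q1 (vadd u x) (e (vadd u x)) b)). lra.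
  apply nodup_box. intros; apply Qat_row_sum; auto.
Qed.

Lemma lsum_odd_zero U (c : Site -> R) : NoDup U -> (forall u, ~ In u U -> c u = 0) ->
  (forall u, c (vneg u) = - c u) -> lsum c U = 0.
Proof.
  intros Hn Hs Ho.
  assert (E : lsum (fun u => c (vneg u)) U = lsum c U).
  { apply lsum_vneg; auto. intros u Hu. rewrite <- (vneg_vneg u), Ho, Hs; auto. lra. }
  rewrite (lsum_ext _ (fun u => - c u)) in E by (intros; apply Ho). rewrite lsum_opp in E. lra.
Qed.

Lemma Top_const d U P0 c eps Q0 Q1 K a e :
  NoDup U -> lsum P0 U = 1 -> (forall u, ~ In u U -> c u = 0) -> (forall u, c (vneg u) = - c u) ->
  sym_stoch Q0 -> sym_stoch Q1 ->
  Top d U P0 c eps Q0 Q1 K (fun _ => a) e = a.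
Proof.
  intros Hn HP Hs Ho H0 H1. rewrite Top_Tjump.
  rewrite (lsum_ext _ (fun u => a * P0 u + (a * eps * sg (e (origin d))) * c u)).
  rewrite lsum_plus, !lsum_scal, HP, lsum_odd_zero; auto. lra.
  intros u _. rewrite Tjump_const; auto. lra.
Qed.

Lemma Top_add_const d U P0 c eps Q0 Q1 K g a e :
  NoDup U -> lsum P0 U = 1 -> (forall u, ~ In u U -> c u = 0) -> (forall u, c (vneg u) = - c u) ->
  sym_stoch Q0 -> sym_stoch Q1 ->
  Top d U P0 c eps Q0 Q1 K (fun s => g s + a) e = Top d U P0 c eps Q0 Q1 K g e + a.
Proof.
  intros Hn HP Hs Ho H0 H1.
  rewrite (Top_ext _ _ _ _ _ _ _ _ _ (fun s => 1 * g s + a * 1)) by (intros; ring).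
  rewrite Top_lin, Top_const by auto. ring.
Qed.

Lemma support_in_box d U Rr : (forall u, In u U -> valid_site d u /\ in_box Rr u) ->
  forall u, In u U -> In u (box d Rr).
Proof. intros H u Hu. apply in_box_iff. apply H; auto. Qed.

Lemma Top_dep_on d U Rr P0 c eps Q0 Q1 K g :
  (forall u, In u U -> valid_site d u /\ in_box Rr u) ->
  dep_on (box d (K + Rr)) (Top d U P0 c eps Q0 Q1 K g).
Proof.
  intros HU e e' He. rewrite !Top_Tjump. apply lsum_ext; intros u Hu.
  rewrite (He (origin d)) by apply origin_in_box. f_equal. unfold Tjump. apply lsum_ext; intros s _.
  f_equal. apply lprod_ext; intros x Hx. rewrite He; auto.
  rewrite Nat.add_comm. apply in_box_vadd; auto. apply (support_in_box d U Rr HU); auto.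
Qed.

Lemma Qat_vneg d Q0 Q1 w : Qat d Q0 Q1 (vneg w) = Qat d Q0 Q1 w.
Proof.
  unfold Qat.
  destruct (site_eq_dec (vneg w) (origin d)) as [E|E], (site_eq_dec w (origin d)) as [E'|E']; auto.
  - exfalso. apply E'. rewrite <- (vneg_vneg w), E, vneg_origin. auto.
  - exfalso. apply E. rewrite E', vneg_origin; auto.
Qed.

Lemma Top_rflip d U Rr P0 c eps Q0 Q1 K g e :
  NoDup U -> (forall u, In u U -> valid_site d u /\ in_box Rr u) ->
  (forall u, ~ In u U -> P0 u = 0 /\ c u = 0) -> (forall u, P0 (vneg u) = P0 u) ->
  (forall u, c (vneg u) = - c u) -> sym_stoch Q0 -> sym_stoch Q1 -> dep_on (box d K) g ->
  Top d U P0 c eps Q0 Q1 K g (rflip e) = Top d U P0 c eps Q0 Q1 K (fun s => g (rflip s)) e.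
Proof.
  intros Hn HU Hs HPe Hco H0 H1 Hg. rewrite !Top_Tjump. symmetry.
  rewrite <- (lsum_vneg (fun u => (P0 u + eps * c u * sg (e (origin d))) *
                                  Tjump d Q0 Q1 K (fun s => g (rflip s)) u e)); auto.
  2: { intros u Hu. destruct (Hs u Hu) as [-> ->]. lra. }
  2: { intros u Hu. destruct (Hs _ Hu) as [E1 E2]. rewrite HPe in E1. rewrite Hco in E2.
       rewrite E1. replace (c u) with 0 by lra. lra. }
  apply lsum_ext; intros u Hu. f_equal.
  - rewrite HPe, Hco. unfold rflip. rewrite vneg_origin, sg_neg. lra.
  - unfold Tjump.
    set (P := fun s : Config =>
                lprod (fun x => Qat d Q0 Q1 (vadd (vneg u) x) (e (vadd (vneg u) x)) (s x)) (box d K)).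
    change (lsum (fun s => g (rflip s) * P s) (site_cfgs (box d K)) =
            lsum (fun s => g s * lprod (fun x => Qat d Q0 Q1 (vadd u x) (rflip e (vadd u x)) (s x)) (box d K))
                 (site_cfgs (box d K))).
    assert (GD : dep_on (box d K) (fun s => g (rflip s) * P s)).
    { intros s s' Hss. f_equal. apply (dep_on_box_rflip d K g Hg); auto.
      unfold P. apply lprod_ext; intros x Hx. rewrite Hss; auto. }
    etransitivity; [apply (lsum_box_cfgs_rflip d K (fun s => g (rflip s) * P s) GD)|].
    apply lsum_ext; intros s _. rewrite rflip_involutive. f_equal. unfold P.
    rewrite <- (lprod_perm _ _ _ (box_perm_vneg d K)), lprod_map.
    apply lprod_ext; intros x Hx. rewrite <- vneg_vadd, Qat_vneg.
    unfold rflip at 1. rewrite vneg_vneg, sym_stoch_negb_r; [reflexivity|].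
    unfold Qat; destruct site_eq_dec; auto.
Qed.

Definition spin_at (gam : list nat) (t d : nat) (e : Config) : R :=
  if in_dec Nat.eq_dec t gam then sg (e (origin d)) else 1.

(* [Gwalsh gam k t] is S^[t in gam] T S^[t+1 in gam] T ... T S^[t+k in gam] 1, with S the
   multiplication by the spin at the origin: the contribution of the times t, ..., t+k to
   the conditional expectation of [Psi gam] (see [Ev_Psi]). *)
Fixpoint Gwalsh d U Rr P0 c eps Q0 Q1 (gam : list nat) (k t : nat) : Config -> R :=
  match k with
  | O => fun e => spin_at gam t d e
  | S k' => fun e =>
      spin_at gam t d e * Top d U P0 c eps Q0 Q1 (Rr * S k') (Gwalsh d U Rr P0 c eps Q0 Q1 gam k' (S t)) e
  end.

Definition past_sign (gam : list nat) (t : nat) (hist : nat -> bool) : R :=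
  lprod (fun s => if Nat.ltb s t then sg (hist s) else 1) gam.

Definition shift (x : Site) (xi : Config) : Config := fun y => xi (vadd x y).

Lemma spin_at_dep_on gam t d K : dep_on (box d K) (spin_at gam t d).
Proof. intros e e' H. unfold spin_at. rewrite (H (origin d)) by apply origin_in_box. auto. Qed.

Lemma Gwalsh_dep_on d U Rr P0 c eps Q0 Q1 gam k t :
  (forall u, In u U -> valid_site d u /\ in_box Rr u) ->
  dep_on (box d (Rr * S k)) (Gwalsh d U Rr P0 c eps Q0 Q1 gam k t).
Proof.
  intros HU. revert t. induction k; intros t e e' H; simpl Gwalsh.
  - apply (spin_at_dep_on gam t d (Rr * 1)); auto.
  - rewrite (spin_at_dep_on gam t d (Rr * S (S k)) e e' H). f_equal.
    apply (Top_dep_on d U Rr); auto. replace (Rr * S k + Rr)%nat with (Rr * S (S k))%nat by lia. auto.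
Qed.

Lemma incl_Permutation_app (A B : list Site) : NoDup A -> NoDup B -> incl A B ->
  exists R, Permutation B (A ++ R) /\ NoDup (A ++ R).
Proof.
  intros HA HB Hi.
  set (R := filter (fun y => if in_dec site_eq_dec y A then false else true) B).
  assert (HN : NoDup (A ++ R)).
  { apply NoDup_app; auto. apply NoDup_filter; auto.
    intros a Ha Hr. unfold R in Hr. apply filter_In in Hr. destruct Hr as [_ Hr].
    destruct (in_dec site_eq_dec a A); congruence. }
  exists R. split; auto. apply NoDup_Permutation; auto. intros y. rewrite in_app_iff. unfold R.
  rewrite filter_In. split.
  - intros Hy. destruct (in_dec site_eq_dec y A); auto.
  - intros [Hy|[Hy _]]; auto.
Qed.

Lemma lprod_indicator (gam : list nat) t a : NoDup gam ->
  lprod (fun s => if Nat.eqb s t then a else 1) gam = if in_dec Nat.eq_dec t gam then a else 1.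
Proof.
  induction gam as [|b gam IH]; intros Hn.
  - rewrite lprod_nil. destruct (in_dec Nat.eq_dec t []) as [[]|]; auto.
  - inversion Hn; subst. rewrite lprod_cons, IH by auto.
    destruct (in_dec Nat.eq_dec t (b :: gam)) as [Hi|Hi], (in_dec Nat.eq_dec t gam) as [Hj|Hj];
      destruct (Nat.eqb_spec b t); subst; try contradiction; try lra.
    all: first [ exfalso; apply Hi; simpl; auto | exfalso; destruct Hi as [E|E]; [congruence|contradiction] ].
Qed.

Lemma past_sign_step gam t hist v : NoDup gam ->
  past_sign gam (S t) (updn hist t v) =
  past_sign gam t hist * (if in_dec Nat.eq_dec t gam then sg v else 1).
Proof.
  intros Hn. unfold past_sign. rewrite <- lprod_indicator by auto. rewrite <- lprod_mult.
  apply lprod_ext; intros s _. unfold updn.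
  destruct (Nat.ltb_spec s (S t)), (Nat.ltb_spec s t), (Nat.eqb_spec s t); subst; try lia; lra.
Qed.

(* The spins of the new environment outside the window x + u + box d K are summed out, and
   the remaining ones are relabelled by z |-> x + u + z. *)
Lemma next_env_Tjump d Rr Q0 Q1 K a N x u xi F :
  sym_stoch Q0 -> sym_stoch Q1 -> In x (box d a) -> In u (box d Rr) -> (a + Rr + K <= N)%nat ->
  dep_on (box d K) F ->
  lsum (fun xi' : Config => lprod (fun y => (if site_eq_dec y x then Q1 else Q0) (xi y) (xi' y)) (box d N) *
                 F (shift (vadd x u) xi')) (configs (box d N)) =
  Tjump d Q0 Q1 K F u (shift x xi).
Proof.
  intros HQ0 HQ1 Hx Hu HN HF.
  pose proof (box_valid _ _ _ Hx) as Vx. pose proof (box_valid _ _ _ Hu) as Vu.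
  unfold valid_site in *.
  set (L := box d K). set (psi := fun z => vadd (vadd x u) z).
  assert (Hinj : forall z z', In z L -> In z' L -> psi z = psi z' -> z = z').
  { intros z z' Hz Hz' E. apply box_valid in Hz, Hz'. unfold valid_site in *.
    apply (vadd_cancel (vadd x u)); auto.
    rewrite vadd_len; lia. rewrite vadd_len; lia. }
  assert (Hincl : incl (map psi L) (box d N)).
  { intros y Hy. apply in_map_iff in Hy. destruct Hy as [z [<- Hz]]. unfold psi.
    apply (box_mono d (a + Rr + K)); auto. apply in_box_vadd; auto. apply in_box_vadd; auto. }
  assert (HnL : NoDup (map psi L)) by (apply nodup_map_inj; auto; apply nodup_box).
  destruct (incl_Permutation_app _ _ HnL (nodup_box d N) Hincl) as [R [HP HnR]].
  set (q := fun y b => (if site_eq_dec y x then Q1 else Q0) (xi y) b).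
  rewrite configs_spin_cfgs.
  change (lsum (fun xi' : Site -> bool => lprod (fun y => q y (xi' y)) (box d N) * F (fun z => xi' (psi z)))
               (site_cfgs (box d N)) =
          Tjump d Q0 Q1 K F u (shift x xi)).
  rewrite (lsum_ext _ (fun xi' => lprod (fun y => q y (xi' y)) (map psi L ++ R) * F (fun z => xi' (psi z))))
    by (intros; rewrite (lprod_perm _ _ _ HP); auto).
  rewrite (lsum_spin_cfgs_perm site_eq_dec _ _ _ HP).
  rewrite (lsum_product_kernel_marginal site_eq_dec q (map psi L) R); auto.
  2: { intros y. unfold q. destruct site_eq_dec; [apply HQ1|apply HQ0]. }
  2: { intros s s' Hs. apply HF. intros z Hz. apply Hs. apply in_map; auto. }
  rewrite (lsum_ext _ (fun xi' => lprod (fun z => q (psi z) (xi' (psi z))) L * F (fun z => xi' (psi z))))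
    by (intros; rewrite lprod_map; auto).
  rewrite (lsum_spin_cfgs_reindex site_eq_dec psi q L F (nodup_box d K) Hinj HF).
  unfold Tjump. apply lsum_ext; intros s _. rewrite Rmult_comm. f_equal.
  apply lprod_ext; intros z Hz. apply box_valid in Hz. unfold valid_site in Hz.
  unfold q, psi, shift, Qat. rewrite vadd_assoc by lia.
  destruct (site_eq_dec (vadd x (vadd u z)) x) as [E|E], (site_eq_dec (vadd u z) (origin d)) as [E'|E'];
    auto.
  - exfalso. apply E'. apply vadd_eq_self in E. rewrite E. f_equal; lia. rewrite vadd_len; lia.
  - exfalso. apply E. rewrite E'. rewrite <- Vx. apply vadd_origin_r.
Qed.

Lemma shift_origin x xi d : length x = d -> shift x xi (origin d) = xi x.
Proof. intros H. unfold shift. rewrite <- H, vadd_origin_r. auto. Qed.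

Lemma Ev_Psi d U Rr P0 c eps Q0 Q1 m gam :
  (forall u, In u U -> valid_site d u /\ in_box Rr u) -> sym_stoch Q0 -> sym_stoch Q1 ->
  NoDup gam -> (forall s, In s gam -> (s < m)%nat) ->
  forall k t hist x xi, (t + k + 1 = m)%nat -> In x (box d (Rr * t)) ->
  Ev d U P0 c eps Q0 Q1 (box d (Rr * m)) (Psi gam) k t hist x xi =
  past_sign gam t hist * Gwalsh d U Rr P0 c eps Q0 Q1 gam k t (shift x xi).
Proof.
  intros HU HQ0 HQ1 Hn Hm. induction k; intros t hist x xi Ht Hx.
  - pose proof (box_valid _ _ _ Hx) as Vx. unfold valid_site in Vx.
    cbn [Ev Gwalsh]. unfold spin_at. rewrite shift_origin by auto. unfold Psi.
    rewrite <- (lprod_indicator gam t (sg (xi x)) Hn). unfold past_sign. rewrite <- lprod_mult.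
    apply lprod_ext; intros s Hs. specialize (Hm s Hs). unfold updn.
    destruct (Nat.ltb_spec s t), (Nat.eqb_spec s t); subst; try lia; lra.
  - pose proof (box_valid _ _ _ Hx) as Vx. unfold valid_site in Vx.
    cbn [Ev Gwalsh]. rewrite Top_Tjump. rewrite <- !lsum_scal. apply lsum_ext; intros u Hu.
    assert (Hub : In u (box d Rr)) by (apply in_box_iff; apply HU; auto).
    rewrite (lsum_ext _ (fun xi' : Config => past_sign gam (S t) (updn hist t (xi x)) *
         (lprod (fun y => (if site_eq_dec y x then Q1 else Q0) (xi y) (xi' y)) (box d (Rr * m)) *
          Gwalsh d U Rr P0 c eps Q0 Q1 gam k (S t) (shift (vadd x u) xi')))).
    2: { intros xi' _. rewrite IHk; try lia. ring.
         replace (Rr * S t)%nat with (Rr * t + Rr)%nat by lia. apply in_box_vadd; auto. }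
    rewrite lsum_scal.
    rewrite (next_env_Tjump d Rr Q0 Q1 (Rr * S k) (Rr * t) (Rr * m)); auto.
    2: { replace m with (t + S k + 1)%nat by lia. nia. }
    2: { apply Gwalsh_dep_on; auto. }
    rewrite past_sign_step by auto. unfold spin_at. rewrite shift_origin by auto. ring.
Qed.

Fixpoint revseq (m : nat) : list nat := match m with O => [] | S m' => m' :: revseq m' end.

Lemma revseq_rev m : revseq m = rev (seq 0 m).
Proof. induction m; auto. cbn [revseq]. rewrite seq_S, rev_app_distr. simpl. rewrite IHm. auto. Qed.

Lemma in_revseq m t : In t (revseq m) <-> (t < m)%nat.
Proof. rewrite revseq_rev, <- in_rev, in_seq. lia. Qed.

Lemma nodup_revseq m : NoDup (revseq m).
Proof. rewrite revseq_rev. apply NoDup_rev. apply seq_NoDup. Qed.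

Lemma bseqs_spin_cfgs m : bseqs m = spin_cfgs Nat.eq_dec (revseq m).
Proof.
  induction m; simpl; auto. rewrite IHm. f_equal. apply functional_extensionality; intro z.
  unfold updn, setspin. f_equal; f_equal; apply functional_extensionality; intro n;
  destruct (Nat.eqb_spec n m), (Nat.eq_dec n m); congruence.
Qed.

Lemma walsh_inversion m f z : depends_first m f ->
  f z = lsum (fun gam => wcoef m f gam * Psi gam z) (subsets (seq 0 m)).
Proof.
  intros Hf.
  assert (Hd : dep_on (revseq m) f).
  { intros s s' H. apply Hf. intros t Ht. apply H. apply in_revseq; auto. }
  rewrite (fourier_inversion Nat.eq_dec (revseq m) f z (nodup_revseq m) Hd).
  assert (Hw : forall G, fourier_coef Nat.eq_dec (revseq m) f G = wcoef m f G).
  { intros G. unfold fourier_coef, wcoef. rewrite bseqs_spin_cfgs.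
    replace (length (revseq m)) with m. reflexivity.
    rewrite revseq_rev, length_rev, length_seq. auto. }
  rewrite (lsum_ext _ (fun gam => wcoef m f gam * Psi gam z)) by (intros; rewrite Hw; auto).
  apply lsum_subsets_perm.
  - intros G G' HG. unfold wcoef, Psi. rewrite (lprod_perm _ _ _ HG). f_equal. f_equal.
    apply lsum_ext; intros. rewrite (lprod_perm _ _ _ HG). auto.
  - rewrite revseq_rev. apply Permutation_sym, Permutation_rev.
Qed.

Lemma Ev_lsum {I} d U P0 c eps Q0 Q1 B (f : (nat -> bool) -> R) (h : I -> (nat -> bool) -> R)
    (a : I -> R) Is :
  (forall z, f z = lsum (fun i => a i * h i z) Is) ->
  forall k t hist x xi,
  Ev d U P0 c eps Q0 Q1 B f k t hist x xi =
  lsum (fun i => a i * Ev d U P0 c eps Q0 Q1 B (h i) k t hist x xi) Is.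
Proof.
  intros Hf. induction k; intros t hist x xi.
  - cbn [Ev]. apply Hf.
  - cbn [Ev].
    rewrite (lsum_ext (fun i => a i * _) (fun i => lsum (fun u => (P0 u + eps * c u * sg (xi x)) *
      lsum (fun xi' => a i * (lprod (fun y => (if site_eq_dec y x then Q1 else Q0) (xi y) (xi' y)) B *
         Ev d U P0 c eps Q0 Q1 B (h i) k (S t) (updn hist t (xi x)) (vadd x u) xi')) (configs B)) U)).
    + rewrite (lsum_swap _ Is U). apply lsum_ext; intros u _. rewrite lsum_scal. f_equal.
      rewrite (lsum_swap _ Is (configs B)). apply lsum_ext; intros xi' _. rewrite IHk. rewrite <- lsum_scal.
      apply lsum_ext; intros; ring.
    + intros i _. rewrite <- lsum_scal. apply lsum_ext; intros u _.
      rewrite lsum_scal. ring.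
Qed.

Lemma eq0_of_geometric_bound (x C mu : R) : 0 <= mu < 1 -> (forall n, Rabs x <= mu ^ n * C) -> x = 0.
Proof.
  intros Hmu H. destruct (Req_dec x 0) as [|Hx]; auto. exfalso.
  assert (Hpos : 0 < Rabs x) by (apply Rabs_pos_lt; auto).
  assert (HC : 0 < C). { specialize (H O). simpl in H. lra. }
  destruct (pow_lt_1_zero mu ltac:(rewrite Rabs_right; lra) (Rabs x / C)) as [N HN].
  apply Rdiv_lt_0_compat; auto.
  specialize (HN N (Nat.le_refl _)). specialize (H N). rewrite Rabs_right in HN.
  2: { apply Rle_ge, pow_le; lra. }
  assert (mu ^ N * C < Rabs x / C * C) by (apply Rmult_lt_compat_r; auto).
  unfold Rdiv in H0. rewrite Rmult_assoc, Rinv_l, Rmult_1_r in H0 by lra. lra.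
Qed.

Definition count_in (gam : list nat) (t k : nat) : nat :=
  length (filter (fun i => if in_dec Nat.eq_dec i gam then true else false) (seq t (S k))).

Lemma count_in_S gam t k :
  count_in gam t (S k) = ((if in_dec Nat.eq_dec t gam then 1 else 0) + count_in gam (S t) k)%nat.
Proof. unfold count_in. cbn [seq filter]. destruct (in_dec Nat.eq_dec t gam); reflexivity. Qed.

Lemma count_in_seq gam m : NoDup gam -> incl gam (seq 0 m) -> (1 <= m)%nat ->
  count_in gam 0 (m - 1) = length gam.
Proof.
  intros Hn Hi Hm. unfold count_in. replace (S (m - 1)) with m by lia.
  apply Permutation_length. apply NoDup_Permutation.
  - apply NoDup_filter, seq_NoDup.
  - auto.
  - intros x. rewrite filter_In. split.
    + intros [_ H]. destruct (in_dec Nat.eq_dec x gam); congruence.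
    + intros H. split. apply Hi; auto. destruct (in_dec Nat.eq_dec x gam); congruence.
Qed.

Section Contraction.
Variables (d : nat) (U : list Site) (Rr : nat) (P0 c : Site -> R) (eps : R)
  (Q0 Q1 : bool -> bool -> R) (M mubar : R) (piw : list Site -> Config -> R).
Hypothesis HnU : NoDup U.
Hypothesis HU : forall u, In u U -> valid_site d u /\ in_box Rr u.
Hypothesis Hs : forall u, ~ In u U -> P0 u = 0 /\ c u = 0.
Hypothesis HP1 : lsum P0 U = 1.
Hypothesis HPe : forall u, P0 (vneg u) = P0 u.
Hypothesis Hco : forall u, c (vneg u) = - c u.
Hypothesis HQ0 : sym_stoch Q0.
Hypothesis HQ1 : sym_stoch Q1.
Hypothesis HM : 1 < M.
Hypothesis Hmu : 0 < mubar < 1.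
Hypothesis Hpw0 : forall s, piw [] s = 1.
Hypothesis Hpwc : forall L y s, NoDup (y :: L) -> Forall (valid_site d) (y :: L) ->
     piw L s = piw (y :: L) (upd s y true) + piw (y :: L) (upd s y false).
Hypothesis Hpwn : forall L s, NoDup L -> Forall (valid_site d) L -> 0 <= piw L s.
Hypothesis Hinv : forall K g, depends_on (box d K) g ->
     integ piw (box d (K + Rr)) (Top d U P0 c eps Q0 Q1 K g) = integ piw (box d K) g.
Hypothesis Hcon : forall K g, depends_on (box d K) g -> integ piw (box d K) g = 0 ->
     normM M (box d (K + Rr)) (Top d U P0 c eps Q0 Q1 K g) <= mubar * normM M (box d K) g.

Notation T := (Top d U P0 c eps Q0 Q1).
Notation nrm K g := (fourier_norm site_eq_dec M (box d K) g).
Notation I K g := (integ piw (box d K) g).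

Lemma lsum_piw L : NoDup L -> Forall (valid_site d) L ->
  lsum (fun s : Site -> bool => piw L s) (site_cfgs L) = 1.
Proof.
  induction L; intros Hn Hv.
  - rewrite lsum_spin_cfgs_nil. apply Hpw0.
  - rewrite lsum_spin_cfgs_cons. rewrite (lsum_ext _ (piw L)).
    + inversion Hn; inversion Hv; subst. apply IHL; auto.
    + intros s _. symmetry. apply (Hpwc L a s); auto.
Qed.

Lemma box_forall_valid K : Forall (valid_site d) (box d K).
Proof. apply Forall_forall. intros; eapply box_valid; eauto. Qed.

Lemma lsum_piw_box K : lsum (fun s : Site -> bool => piw (box d K) s) (site_cfgs (box d K)) = 1.
Proof. apply lsum_piw. apply nodup_box. apply box_forall_valid. Qed.

Lemma piw_box_ge0 K s : 0 <= piw (box d K) s.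
Proof. apply Hpwn. apply nodup_box. apply box_forall_valid. Qed.

Lemma integ_spin_cfgs K g :
  I K g = lsum (fun s : Site -> bool => g s * piw (box d K) s) (site_cfgs (box d K)).
Proof. unfold integ. rewrite configs_spin_cfgs. reflexivity. Qed.

Lemma integ_lin K g1 g2 a b : I K (fun s => a * g1 s + b * g2 s) = a * I K g1 + b * I K g2.
Proof. rewrite !integ_spin_cfgs. rewrite <- !lsum_scal, <- lsum_plus. apply lsum_ext; intros; lra. Qed.

Lemma integ_const K a : I K (fun _ => a) = a.
Proof. rewrite integ_spin_cfgs, lsum_scal, lsum_piw_box. lra. Qed.

Lemma integ_ext K g1 g2 : (forall s, g1 s = g2 s) -> I K g1 = I K g2.
Proof. intros H. replace g2 with g1; auto. apply functional_extensionality; auto. Qed.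

Lemma Rabs_integ_le K g B : (forall s, Rabs (g s) <= B) -> Rabs (I K g) <= B.
Proof.
  intros H. rewrite integ_spin_cfgs. eapply Rle_trans; [apply lsum_abs|].
  rewrite <- (Rmult_1_r B), <- (lsum_piw_box K), <- lsum_scal. apply lsum_le; intros s _.
  rewrite Rabs_mult, (Rabs_right (piw _ _)) by (apply Rle_ge, piw_box_ge0).
  apply Rmult_le_compat_r; auto. apply piw_box_ge0.
Qed.

Lemma Rabs_integ_le_norm K g : dep_on (box d K) g -> Rabs (I K g) <= nrm K g.
Proof.
  intros Hg. apply Rabs_integ_le. intros s. apply Rabs_le_fourier_norm; auto. apply nodup_box. lra.
Qed.

Fixpoint Titer (K n : nat) (g : Config -> R) : Config -> R :=
  match n with O => g | S n' => T (K + n' * Rr) (Titer K n' g) end.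

Lemma Titer_dep_on K n g : dep_on (box d K) g -> dep_on (box d (K + n * Rr)) (Titer K n g).
Proof.
  intros Hg. induction n; simpl.
  - replace (K + 0)%nat with K by lia. auto.
  - replace (K + (Rr + n * Rr))%nat with (K + n * Rr + Rr)%nat by lia. apply Top_dep_on; auto.
Qed.

Lemma Titer_add_const K n g a e : Titer K n (fun s => g s + a) e = Titer K n g e + a.
Proof.
  revert e. induction n; intros e; simpl; auto.
  rewrite (Top_ext _ _ _ _ _ _ _ _ _ (fun s => Titer K n g s + a)) by auto.
  apply Top_add_const; auto. intros u Hu; apply (Hs u Hu).
Qed.

Lemma Titer_rflip K n g e : dep_on (box d K) g ->
  Titer K n (fun s => g (rflip s)) e = Titer K n g (rflip e).
Proof.
  intros Hg. revert e. induction n; intros e; simpl; auto.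
  rewrite (Top_rflip d U Rr P0 c eps Q0 Q1 _ _ _ HnU HU Hs HPe Hco HQ0 HQ1 (Titer_dep_on K n g Hg)).
  apply Top_ext; intros; auto.
Qed.

Lemma integ_Titer K n g : dep_on (box d K) g -> I (K + n * Rr) (Titer K n g) = I K g.
Proof.
  intros Hg. induction n; simpl.
  - replace (K + 0)%nat with K by lia. auto.
  - replace (K + (Rr + n * Rr))%nat with (K + n * Rr + Rr)%nat by lia. rewrite Hinv; auto.
    apply Titer_dep_on; auto.
Qed.

Lemma Titer_contract K n g : dep_on (box d K) g -> I K g = 0 ->
  nrm (K + n * Rr) (Titer K n g) <= mubar ^ n * nrm K g.
Proof.
  intros Hg H0. induction n; simpl.
  - replace (K + 0)%nat with K by lia. lra.
  - replace (K + (Rr + n * Rr))%nat with (K + n * Rr + Rr)%nat by lia.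
    rewrite <- normM_fourier_norm. eapply Rle_trans. apply Hcon. apply Titer_dep_on; auto.
    rewrite (integ_Titer K n g Hg). auto.
    rewrite normM_fourier_norm. rewrite Rmult_assoc. apply Rmult_le_compat_l; lra.
Qed.

Lemma integ_centered K h : I K (fun s => h s + - I K h) = 0.
Proof.
  rewrite (integ_ext K _ (fun s => 1 * h s + (- I K h) * 1)) by (intros; ring).
  rewrite integ_lin, integ_const. ring.
Qed.

(* Invariance of Pi under [rflip] is not assumed: it follows because [T] commutes with
   [rflip] and [Titer K n g] converges to the constant [I K g] by the contraction
   hypothesis. *)
Lemma integ_rflip K g : dep_on (box d K) g -> I K (fun s => g (rflip s)) = I K g.
Proof.
  intros Hg. set (a := I K g). set (h := fun s => g s + - a).
  assert (Hh : dep_on (box d K) h) by (intros s s' E; unfold h; rewrite (Hg s s' E); auto).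
  assert (Iterated : forall n, I K (fun s => g (rflip s)) =
                               I (K + n * Rr) (fun e => Titer K n h (rflip e)) + a).
  { intros n. etransitivity.
    { symmetry. apply (integ_Titer K n (fun s => g (rflip s))). apply dep_on_box_rflip; auto. }
    rewrite (integ_ext _ _ (fun e => 1 * Titer K n h (rflip e) + a * 1)).
    - rewrite integ_lin, integ_const. ring.
    - intros e. rewrite Titer_rflip by auto.
      replace g with (fun s => h s + a) by (apply functional_extensionality; intros; unfold h; ring).
      rewrite Titer_add_const. ring. }
  enough (I K (fun s => g (rflip s)) - a = 0) by lra.
  apply (eq0_of_geometric_bound _ (nrm K h) mubar); [lra|]. intros n.
  rewrite (Iterated n). replace (_ + a - a) with (I (K + n * Rr) (fun e => Titer K n h (rflip e))) by ring.
  eapply Rle_trans.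
  - apply Rabs_integ_le. intros e. apply (Rabs_le_fourier_norm site_eq_dec M); [apply nodup_box| |lra].
    apply Titer_dep_on; auto.
  - apply Titer_contract; [auto|apply integ_centered].
Qed.

Lemma integ_odd_eq0 K g : dep_on (box d K) g -> (forall s, g (rflip s) = - g s) -> I K g = 0.
Proof.
  intros Hg Ho. pose proof (integ_rflip K g Hg) as E.
  rewrite (integ_ext K _ (fun s => (-1) * g s + 0 * g s)) in E by (intros; rewrite Ho; lra).
  rewrite integ_lin in E. lra.
Qed.

Lemma Top_rflip_parity K h (p : R) : dep_on (box d K) h -> (forall e, h (rflip e) = p * h e) ->
  forall e, T K h (rflip e) = p * T K h e.
Proof.
  intros Hd Hp e. rewrite (Top_rflip d U Rr); auto.
  rewrite (Top_ext _ _ _ _ _ _ _ _ _ (fun s => p * h s + 0 * h s)) by (intros; rewrite Hp; ring).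
  rewrite Top_lin. ring.
Qed.

Lemma Top_centered_le K h : dep_on (box d K) h ->
  I (K + Rr) (T K h) = I K h /\
  nrm (K + Rr) (fun e => T K h e + - I K h) <= mubar * nrm K (fun e => h e + - I K h).
Proof.
  intros Hd. split; [apply Hinv; auto|].
  rewrite (fourier_norm_ext _ _ _ _ (T K (fun s => h s + - I K h)))
    by (intros; rewrite Top_add_const; auto; intros u Hu; apply (Hs u Hu)).
  rewrite <- !normM_fourier_norm. apply Hcon.
  - intros s s' E. rewrite (Hd s s' E). auto.
  - apply integ_centered.
Qed.

Lemma Top_odd_le K h : dep_on (box d K) h -> (forall e, h (rflip e) = - h e) ->
  nrm (K + Rr) (T K h) <= mubar * nrm K h.
Proof. intros Hd Ho. rewrite <- !normM_fourier_norm. apply Hcon; [auto|]. apply integ_odd_eq0; auto. Qed.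

Lemma nrm_ge0 K h : 0 <= nrm K h.
Proof. apply fourier_norm_ge0. lra. Qed.

Lemma nrm_add_const_le K h a : nrm K (fun e => h e + a) <= nrm K h + Rabs a.
Proof.
  rewrite (fourier_norm_ext _ _ _ _ (fun e => 1 * h e + a * 1)) by (intros; ring).
  eapply Rle_trans; [apply fourier_norm_lin_le; lra|].
  rewrite fourier_norm_const by apply nodup_box. rewrite Rabs_R1. lra.
Qed.

Lemma nrm_le_centered K h : nrm K h <= nrm K (fun e => h e + - I K h) + Rabs (I K h).
Proof.
  rewrite (fourier_norm_ext _ _ _ h (fun e => (h e + - I K h) + I K h)) at 1 by (intros; ring).
  apply nrm_add_const_le.
Qed.

Lemma nrm_spin_mul_le K h : nrm K (fun e => sg (e (origin d)) * h e) <= M * nrm K h.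
Proof. apply fourier_norm_spin_mul_le; [apply nodup_box|apply origin_in_box|lra]. Qed.

Lemma even_bound_of_norm K h B : dep_on (box d K) h -> nrm K h <= B ->
  Rabs (I K h) <= B /\ nrm K (fun e => h e + - I K h) <= 2 * B.
Proof.
  intros Hd Hn. assert (HI : Rabs (I K h) <= B) by (eapply Rle_trans; [apply Rabs_integ_le_norm|]; auto).
  split; [exact HI|]. eapply Rle_trans; [apply nrm_add_const_le|].
  rewrite Rabs_Ropp. lra.
Qed.

Definition parity_sign (j : nat) : R := if Nat.even j then 1 else -1.

Lemma parity_sign_S j : parity_sign (S j) = - parity_sign j.
Proof. unfold parity_sign. rewrite Nat.even_succ, <- Nat.negb_even. destruct (Nat.even j); simpl; lra. Qed.

Notation mus := (mustar M mubar).

Definition alpha : R := M * (1 + 2 * mubar) / mus.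

Lemma mus_gt0 : 0 < mus.
Proof. unfold mustar. apply Rmult_lt_0_compat; [lra|]. apply sqrt_lt_R0. nra. Qed.

Lemma alpha_mus : alpha * mus = M * (1 + 2 * mubar).
Proof. unfold alpha. field. apply Rgt_not_eq, mus_gt0. Qed.

Lemma Mmu_alpha : M * mubar * alpha = mus.
Proof.
  pose proof mus_gt0. apply (Rmult_eq_reg_r mus); [|lra].
  rewrite Rmult_assoc, alpha_mus. unfold mustar.
  transitivity (M * M * (mubar * (1 + 2 * mubar))); [ring|].
  rewrite <- (sqrt_sqrt (mubar * (1 + 2 * mubar))) at 1 by nra. ring.
Qed.

Lemma alpha_gt0 : 0 < alpha.
Proof. unfold alpha. apply Rdiv_lt_0_compat; [nra|apply mus_gt0]. Qed.

(* The invariant after [j] multiplications by [sg (e (origin d))]: for even [j] the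
   function is [rflip]-even and we control its mean and its centred part; for odd
   [j] it is [rflip]-odd, hence centred, and we control its norm. *)
Definition parity_bound (h : Config -> R) (K j : nat) : Prop :=
  dep_on (box d K) h /\ (forall e, h (rflip e) = parity_sign j * h e) /\
  (if Nat.even j then Rabs (I K h) <= mus ^ j /\ nrm K (fun e => h e + - I K h) <= 2 * mus ^ j
   else nrm K h <= alpha * mus ^ j).

Lemma parity_bound_norm_le h K j : parity_bound h K j -> nrm K h <= (alpha + 3) * mus ^ j.
Proof.
  intros [_ [_ Hb]]. pose proof alpha_gt0. pose proof mus_gt0.
  assert (0 < mus ^ j) by (apply pow_lt; auto).
  destruct (Nat.even j); [|nra].
  destruct Hb as [Ha Hn]. pose proof (nrm_le_centered K h). nra.
Qed.

Lemma parity_bound_Top K h j : parity_bound h K j -> parity_bound (T K h) (K + Rr) j.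
Proof.
  intros [Hd [Hp Hb]]. pose proof alpha_gt0. pose proof mus_gt0.
  assert (0 < mus ^ j) by (apply pow_lt; auto).
  split; [|split].
  - apply Top_dep_on; auto.
  - apply Top_rflip_parity; auto.
  - destruct (Nat.even j) eqn:Ej.
    + destruct Hb as [Ha Hn]. destruct (Top_centered_le K h Hd) as [-> Hc]. split; [exact Ha|].
      pose proof (nrm_ge0 K (fun e => h e + - I K h)). nra.
    + eapply Rle_trans.
      * apply Top_odd_le; auto. intros e. rewrite Hp. unfold parity_sign. rewrite Ej. ring.
      * pose proof (nrm_ge0 K h). nra.
Qed.

Lemma parity_bound_spin_Top K h j : parity_bound h K j ->
  parity_bound (fun e => sg (e (origin d)) * T K h e) (K + Rr) (S j).
Proof.
  intros Hh. destruct (parity_bound_Top K h j Hh) as [Hgd [Hgp _]]. destruct Hh as [Hd [Hp Hb]].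
  pose proof alpha_gt0. pose proof mus_gt0. assert (0 < mus ^ j) by (apply pow_lt; auto).
  assert (HSd : dep_on (box d (K + Rr)) (fun e => sg (e (origin d)) * T K h e)).
  { intros e e' E. rewrite (E (origin d)), (Hgd e e' E) by apply origin_in_box. auto. }
  split; [exact HSd|split].
  - intros e. unfold rflip at 1. rewrite vneg_origin, sg_neg. fold (rflip e).
    rewrite Hgp, parity_sign_S. ring.
  - rewrite Nat.even_succ, <- Nat.negb_even. destruct (Nat.even j) eqn:Ej; simpl.
    + destruct Hb as [Ha Hn]. destruct (Top_centered_le K h Hd) as [HI Hc].
      assert (Hg : nrm (K + Rr) (T K h) <= (1 + 2 * mubar) * mus ^ j).
      { eapply Rle_trans; [apply nrm_le_centered|]. rewrite HI.
        pose proof (nrm_ge0 K (fun e => h e + - I K h)). nra. }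
      eapply Rle_trans; [apply nrm_spin_mul_le|].
      rewrite <- Rmult_assoc, alpha_mus. nra.
    + assert (Hg : nrm (K + Rr) (T K h) <= mubar * (alpha * mus ^ j)).
      { eapply Rle_trans.
        - apply Top_odd_le; auto. intros e. rewrite Hp. unfold parity_sign. rewrite Ej. ring.
        - pose proof (nrm_ge0 K h). nra. }
      apply even_bound_of_norm; [exact HSd|].
      eapply Rle_trans; [apply nrm_spin_mul_le|]. simpl pow.
      replace (mus * mus ^ j) with (M * (mubar * (alpha * mus ^ j)))
        by (transitivity (M * mubar * alpha * mus ^ j); [ring|rewrite Mmu_alpha; ring]).
      apply Rmult_le_compat_l; lra.
Qed.

Lemma parity_bound_spin_at gam t K :
  parity_bound (spin_at gam t d) K (if in_dec Nat.eq_dec t gam then 1 else 0).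
Proof.
  unfold spin_at. destruct (in_dec Nat.eq_dec t gam); (split; [|split]).
  - intros e e' E. rewrite (E (origin d)) by apply origin_in_box. auto.
  - intros e. unfold rflip. rewrite vneg_origin, sg_neg. unfold parity_sign; simpl; ring.
  - simpl.
    rewrite (fourier_norm_ext _ _ _ _ (fun e => sg (e (origin d)) * (fun _ => 1) e)) by (intros; ring).
    eapply Rle_trans; [apply nrm_spin_mul_le|].
    rewrite fourier_norm_const by apply nodup_box. rewrite Rabs_R1. pose proof alpha_mus. simpl. nra.
  - intros e e' E. auto.
  - intros e. unfold parity_sign; simpl; ring.
  - apply even_bound_of_norm; [intros e e' E; auto|].
    change Config with (Site -> bool).
    rewrite fourier_norm_const by apply nodup_box. rewrite Rabs_R1. simpl. lra.
Qed.

Lemma parity_bound_step gam t K h j : parity_bound h K j ->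
  parity_bound (fun e => spin_at gam t d e * T K h e) (K + Rr) (if in_dec Nat.eq_dec t gam then S j else j).
Proof.
  intros Hh. unfold spin_at. destruct (in_dec Nat.eq_dec t gam).
  - apply parity_bound_spin_Top; auto.
  - replace (fun e => 1 * T K h e) with (T K h) by (apply functional_extensionality; intros; ring).
    apply parity_bound_Top; auto.
Qed.

Lemma Gwalsh_parity_bound gam k t :
  parity_bound (Gwalsh d U Rr P0 c eps Q0 Q1 gam k t) (Rr * S k) (count_in gam t k).
Proof.
  revert t. induction k; intros t.
  - replace (count_in gam t 0) with (if in_dec Nat.eq_dec t gam then 1%nat else 0%nat)
      by (unfold count_in; cbn; destruct (in_dec Nat.eq_dec t gam); reflexivity).
    apply parity_bound_spin_at.
  - replace (Rr * S (S k))%nat with (Rr * S k + Rr)%nat by lia.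
    rewrite count_in_S. pose proof (parity_bound_step gam t _ _ _ (IHk (S t))) as H.
    destruct (in_dec Nat.eq_dec t gam); exact H.
Qed.

Lemma walsh_sum_norm_le m (w : list nat -> R) (B : R) : (1 <= m)%nat ->
  (forall gam, In gam (subsets (seq 0 m)) -> Rabs (w gam) <= B) ->
  nrm (Rr * m) (fun e => lsum (fun gam => w gam * Gwalsh d U Rr P0 c eps Q0 Q1 gam (m - 1) 0 e)
                              (subsets (seq 0 m)))
    <= (alpha + 3) * B * (1 + mus) ^ m.
Proof.
  intros Hm Hw. replace (Rr * m)%nat with (Rr * S (m - 1))%nat by (f_equal; lia).
  eapply Rle_trans; [apply fourier_norm_lsum_le; lra|].
  rewrite (lsum_ext _ (fun gam => Rabs (w gam) *
                                  nrm (Rr * S (m - 1)) (Gwalsh d U Rr P0 c eps Q0 Q1 gam (m - 1) 0)))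
    by (intros; apply fourier_norm_scal).
  apply (Rle_trans _ (lsum (fun gam => B * ((alpha + 3) * mus ^ length gam)) (subsets (seq 0 m)))).
  - apply lsum_le; intros gam Hg. apply Rmult_le_compat; [apply Rabs_pos|apply nrm_ge0|auto|].
    pose proof (parity_bound_norm_le _ _ _ (Gwalsh_parity_bound gam (m - 1) 0)) as Hb.
    rewrite count_in_seq in Hb; auto.
    + apply (subsets_nodup (seq 0 m) gam (seq_NoDup _ _) Hg).
    + apply (subsets_incl (seq 0 m) gam Hg).
  - rewrite !lsum_scal, lsum_subsets_pow, length_seq. lra.
Qed.

End Contraction.

Lemma Rabs_wcoef_le_maxcoef m f gam : In gam (subsets (seq 0 m)) -> Rabs (wcoef m f gam) <= maxcoef m f.
Proof. intros H. unfold maxcoef. apply fold_max_ge. apply in_map_iff. exists gam; auto. Qed.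

Lemma Gf_walsh_expansion d U Rr P0 c eps Q0 Q1 m f e :
  (forall u, In u U -> valid_site d u /\ in_box Rr u) -> sym_stoch Q0 -> sym_stoch Q1 ->
  (1 <= m)%nat -> depends_first m f ->
  Gf d U Rr P0 c eps Q0 Q1 m f e =
  lsum (fun gam => wcoef m f gam * Gwalsh d U Rr P0 c eps Q0 Q1 gam (m - 1) 0 e) (subsets (seq 0 m)).
Proof.
  intros HU HQ0 HQ1 Hm Hf. unfold Gf.
  rewrite (Ev_lsum d U P0 c eps Q0 Q1 _ f Psi (wcoef m f) (subsets (seq 0 m)))
    by (intros z; apply walsh_inversion; auto).
  apply lsum_ext; intros gam Hg. f_equal.
  rewrite (Ev_Psi d U Rr P0 c eps Q0 Q1 m gam); auto.
  - unfold past_sign.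
    rewrite (lprod_ext _ (fun _ => 1)) by (intros; destruct (Nat.ltb_spec x 0); [lia|auto]).
    rewrite lprod_one, Rmult_1_l.
    apply (Gwalsh_dep_on d U Rr P0 c eps Q0 Q1 gam (m - 1) 0 HU). intros y Hy.
    apply box_valid in Hy. unfold shift, valid_site in *. rewrite <- Hy at 1. rewrite vadd_origin_l. auto.
  - apply (subsets_nodup (seq 0 m) gam (seq_NoDup _ _) Hg).
  - intros s Hs. apply (subsets_incl (seq 0 m) gam Hg) in Hs. apply in_seq in Hs. lia.
  - lia.
  - apply origin_in_box.
Qed.

Lemma Gf_dep_on d U Rr P0 c eps Q0 Q1 m f :
  (forall u, In u U -> valid_site d u /\ in_box Rr u) -> sym_stoch Q0 -> sym_stoch Q1 ->
  (1 <= m)%nat -> depends_first m f ->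
  depends_on (box d (Rr * m)) (Gf d U Rr P0 c eps Q0 Q1 m f).
Proof.
  intros HU HQ0 HQ1 Hm Hf e e' E. rewrite !Gf_walsh_expansion by auto.
  apply lsum_ext; intros gam _. f_equal.
  replace (Rr * m)%nat with (Rr * S (m - 1))%nat in E by (f_equal; lia).
  apply Gwalsh_dep_on; auto.
Qed.

Theorem lemma1 (d : nat) (U : list Site) (Rr : nat) (P0 c : Site -> R) (eps : R)
    (Q0 Q1 : bool -> bool -> R) (M mubar : R) (piw : list Site -> Config -> R)
    (Hmodel : model_hyp d U Rr P0 c eps Q0 Q1)
    (Hstand : standing_hyp d U Rr P0 c eps Q0 Q1 M mubar piw) :
  exists C : R, 0 < C /\
    forall (m : nat) (f : (nat -> bool) -> R),
      (1 <= m)%nat -> depends_first m f ->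
      depends_on (box d (Rr * m)) (Gf d U Rr P0 c eps Q0 Q1 m f) /\
      normM M (box d (Rr * m)) (Gf d U Rr P0 c eps Q0 Q1 m f)
        <= C * maxcoef m f * (1 + mustar M mubar) ^ m.
Proof.
  destruct Hmodel as [_ [HnU [HU [Hs [_ [HP1 [HPe [_ [_ [Hco [_ [_ [HQ0 [HQ1 _]]]]]]]]]]]]]].
  destruct Hstand as [HM [Hmu [Hpw0 [_ [_ [Hpwc [[Kd Hdens] [Hinv [_ Hcon]]]]]]]]].
  assert (Hpwn : forall L s, NoDup L -> Forall (valid_site d) L -> 0 <= piw L s)
    by (intros L s H1 H2; apply (Hdens L s H1 H2)).
  exists (alpha M mubar + 3). split; [pose proof (alpha_gt0 M mubar HM Hmu); lra|].
  intros m f Hm Hf. split; [apply Gf_dep_on; auto|].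
  rewrite normM_fourier_norm.
  rewrite (fourier_norm_ext _ _ _ _ _
             (fun e => Gf_walsh_expansion d U Rr P0 c eps Q0 Q1 m f e HU HQ0 HQ1 Hm Hf)).
  apply (walsh_sum_norm_le d U Rr P0 c eps Q0 Q1 M mubar piw
           HnU HU Hs HP1 HPe Hco HQ0 HQ1 HM Hmu Hpw0 Hpwc Hpwn Hinv Hcon); auto.
  intros gam Hg. apply Rabs_wcoef_le_maxcoef; auto.
Qed.
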